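(* There exist absolute constants $c>0$ and $C>0$ such that the following holds. Let $n\ge2$ be an integer and $L,\mu,\Delta,\varepsilon>0$ satisfy $\kappa:=L/\mu\ge\sqrt{3/n}\,(n/2+1)$ and $\varepsilon/\Delta\le0.00327$. Then for every PIFO algorithm $\mathcal{A}$ there exist a dimension $d\le C\,n^{-1/4}\sqrt{\kappa}\log(\Delta/\varepsilon)$ and functions $f_1,\dots,f_n:\mathbb{R}^d\to\mathbb{R}$ such that $\{f_i\}_{i=1}^n$ is $L$-average smooth, $f=\frac1n\sum_i f_i$ is $\mu$-strongly convex, $f(x_0)-f(x^* )=\Delta$ (with $x^*$ the minimizer of $f$ and $x_0$ the initial point of $\mathcal{A}$), and the iterates of $\mathcal{A}$ satisfy $\mathbb{E} f(x_t)-f(x^* )\ge\varepsilon$ for all integers $0\le t\le c\,(n+n^{3/4}\sqrt{\kappa})\log(\Delta/\varepsilon)$. That is, $\mathcal{A}$ needs $\Omega\big((n+n^{3/4}\sqrt\kappa)\log(\Delta/\varepsilon)\big)$ oracle queries.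
   Context: Differentiable $f_1,\dots,f_n:\mathbb{R}^d\to\mathbb{R}$ are $L$-average smooth if $\frac1n\sum_{i=1}^n\|\nabla f_i(x)-\nabla f_i(y)\|_2^2\le L^2\|x-y\|_2^2$ for all $x,y$. A differentiable $g$ is $\mu$-strongly convex if $g(y)\ge g(x)+\langle\nabla g(x),y-x\rangle+\frac{\mu}{2}\|y-x\|_2^2$ for all $x,y$. For $\gamma>0$, $\mathrm{prox}^{\gamma}_g(x)=\arg\min_u\{g(u)+\frac{1}{2\gamma}\|x-u\|_2^2\}$. PIFO algorithm: given $f_1,\dots,f_n:\mathbb{R}^d\to\mathbb{R}$ and $f=\frac1n\sum_i f_i$, a PIFO algorithm $\mathcal{A}$ is specified by a probability vector $(p_1,\dots,p_n)$ ($p_j\ge0$, $\sum_j p_j=1$), an initial point $x_0$ and parameters $\gamma_t>0$; it draws indices $i_1,i_2,\dots$ independently with $\mathbb{P}(i_t=j)=p_j$, at step $t\ge1$ queries the oracle $h_f(x_{t-1},i_t,\gamma_t)=[f_{i_t}(x_{t-1}),\nabla f_{i_t}(x_{t-1}),\mathrm{prox}^{\gamma_t}_{f_{i_t}}(x_{t-1})]$, and outputs an iterate $x_t\in\mathrm{span}\{x_0,\dots,x_{t-1},\nabla f_{i_1}(x_0),\dots,\nabla f_{i_t}(x_{t-1}),\mathrm{prox}^{\gamma_1}_{f_{i_1}}(x_0),\dots,\mathrm{prox}^{\gamma_t}_{f_{i_t}}(x_{t-1})\}$ (the choice within the span may depend on all previously observed information). Iterate $x_t$ uses $t$ oracle queries.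 *)

From Stdlib Require Fin.
From Stdlib Require Import Reals Lra List.
Import ListNotations.
Open Scope R_scope.

Definition vec (d : nat) := Fin.t d -> R.

Fixpoint finsum (d : nat) : (Fin.t d -> R) -> R :=
  match d with
  | O => fun _ => 0
  | S d' => fun g => g Fin.F1 + finsum d' (fun k => g (Fin.FS k))
  end.

Definition vzero {d} : vec d := fun _ => 0.
Definition vadd {d} (x y : vec d) : vec d := fun k => x k + y k.
Definition vsub {d} (x y : vec d) : vec d := fun k => x k - y k.
Definition vscale {d} (a : R) (x : vec d) : vec d := fun k => a * x k.
Definition inner {d} (x y : vec d) : R := finsum d (fun k => x k * y k).
Definition sqnorm {d} (x : vec d) : R := inner x x.
Definition vnorm {d} (x : vec d) : R := sqrt (sqnorm x).

Definition has_gradient {d} (f : vec d -> R) (g : vec d -> vec d) : Prop :=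
  forall x eps, 0 < eps -> exists delta, 0 < delta /\
    forall h, vnorm h < delta ->
      Rabs (f (vadd x h) - f x - inner (g x) h) <= eps * vnorm h.

Definition sum_lt (n : nat) (F : nat -> R) : R :=
  fold_right Rplus 0 (map F (seq 0 n)).

Definition avg_fun (n : nat) {d} (fs : nat -> vec d -> R) : vec d -> R :=
  fun x => / INR n * sum_lt n (fun i => fs i x).

Definition average_smooth (n : nat) {d} (gs : nat -> vec d -> vec d) (L : R) : Prop :=
  forall x y,
    / INR n * sum_lt n (fun i => sqnorm (vsub (gs i x) (gs i y)))
      <= L ^ 2 * sqnorm (vsub x y).

Definition strongly_convex {d} (f : vec d -> R) (mu : R) : Prop :=
  exists g, has_gradient f g /\
    forall x y, f y >= f x + inner (g x) (vsub y x) + mu / 2 * sqnorm (vsub y x).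

Definition is_minimizer {d} (f : vec d -> R) (xs : vec d) : Prop :=
  forall x, f xs <= f x.

Definition is_prox {d} (f : vec d -> R) (gam : R) (x u : vec d) : Prop :=
  forall v, f u + / (2 * gam) * sqnorm (vsub x u) <= f v + / (2 * gam) * sqnorm (vsub x v).

Definition is_prox_unique {d} (f : vec d -> R) (gam : R) (x u : vec d) : Prop :=
  is_prox f gam x u /\ forall v, is_prox f gam x v -> v = u.

(** One oracle answer: index i_t and h_f(x_{t-1}, i_t, gam_t). *)
Record oracle_ans (d : nat) := mkAns {
  ans_idx : nat;
  ans_val : R;
  ans_grad : vec d;
  ans_prox : vec d }.
Arguments ans_idx {d}. Arguments ans_val {d}.
Arguments ans_grad {d}. Arguments ans_prox {d}.

(** For each dimension d
    it has an initial point, step parameters gam_t (t >= 1) and a rule choosing,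
    from the full observed history [a_1; ...; a_t] (indices and oracle answers),
    coefficients (a, b, c) so that
      x_t = sum_{s<t} a s x_s + sum_{s<t} b s grad_{s+1} + sum_{s<t} c s prox_{s+1}. *)
Record PIFO (n : nat) := mkPIFO {
  prob : nat -> R;
  prob_nonneg : forall j, (j < n)%nat -> 0 <= prob j;
  prob_sum : sum_lt n prob = 1;
  init : forall d, vec d;
  gam : forall d : nat, nat -> R;
  gam_pos : forall (d t : nat), 0 < gam d t;
  rule : forall d, list (oracle_ans d) -> (nat -> R) * (nat -> R) * (nat -> R) }.
Arguments prob {n}. Arguments init {n}. Arguments gam {n}. Arguments rule {n}.

Fixpoint lincomb {d} (a : nat -> R) (vs : list (vec d)) (k : nat) : vec d :=
  match vs with
  | [] => vzero
  | v :: vs' => vadd (vscale (a k) v) (lincomb a vs' (S k))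
  end.

(** One step: state (iterates [x_0..x_t], history of t answers), draw index i. *)
Definition step {n} (A : PIFO n) (d : nat) (fs : nat -> vec d -> R)
  (gs : nat -> vec d -> vec d) (px : nat -> R -> vec d -> vec d)
  (st : list (vec d) * list (oracle_ans d)) (i : nat)
  : list (vec d) * list (oracle_ans d) :=
  let '(xs, h) := st in
  let x := last xs (init A d) in
  let g := gam A d (S (length h)) in
  let ans := mkAns d i (fs i x) (gs i x) (px i g x) in
  let h' := h ++ [ans] in
  let '(a, b, c) := rule A d h' in
  let xn := vadd (lincomb a xs 0)
              (vadd (lincomb b (map ans_grad h') 0) (lincomb c (map ans_prox h') 0)) in
  (xs ++ [xn], h').

(** The iterate x_t produced when the drawn indices are l = [i_1; ...; i_t]. *)
Definition iterate {n} (A : PIFO n) (d : nat) (fs : nat -> vec d -> R)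
  (gs : nat -> vec d -> vec d) (px : nat -> R -> vec d -> vec d) (l : list nat) : vec d :=
  last (fst (fold_left (step A d fs gs px) l ([init A d], []))) (init A d).

Fixpoint idx_seqs (n t : nat) : list (list nat) :=
  match t with
  | O => [[]]
  | S t' => flat_map (fun l => map (fun j => l ++ [j]) (seq 0 n)) (idx_seqs n t')
  end.

Definition weight (p : nat -> R) (l : list nat) : R :=
  fold_right (fun j r => p j * r) 1 l.

(** Expectation over i.i.d. i_1..i_t ~ p. *)
Definition expect (n : nat) (p : nat -> R) (t : nat) (F : list nat -> R) : R :=
  fold_right Rplus 0 (map (fun l => weight p l * F l) (idx_seqs n t)).

(* Fix an index j drawn with probability p_j <= 1/n.  After an
   orthogonal change of coordinates y = H (x - x_0), where the Householder
   reflection H sends x_0 onto the first axis, every component f_i is a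
   "chain quadratic"
       sum_m  alpha_m/2 y_m^2 - b_m y_m + lambda_m/2 (y_m - y_{m+1})^2.
   The component f_j carries the links (0,1), (2,3), ...; the other n-1
   components carry the links (1,2), (3,4), ... (scaled by n/(n-1)), so that
   their average is Nesterov's tridiagonal quadratic, whose minimiser is the
   geometric sequence y*_m = gamma (1-s)^m.  Gradients and proximal points of
   the components only reach one new pair of coordinates per query of f_j and
   none per query of another component, hence after t queries the iterate is
   supported on 1 + 2 #{queries of f_j} coordinates and its suboptimality is at
   least a geometric tail of y*.  Averaging over the random indices gives
   E f(x_t) - f* >= Delta/(1+q) (q^2 (1 - p_j (1 - q^4))^t - q^{2d}), q = 1-s,
   and a choice s ~ n^{1/4}/sqrt(kappa), d ~ log(Delta/eps)/s makes this >= eps. *)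

From Stdlib Require Import Reals Lra Lia Psatz List FunctionalExtensionality Classical ZArith.
From Stdlib Require Fin.
Import ListNotations.
Open Scope R_scope.

Fixpoint rsum (d : nat) (F : nat -> R) : R :=
  match d with O => 0 | S d' => rsum d' F + F d' end.

Lemma rsum_ext d F G : (forall m, (m < d)%nat -> F m = G m) -> rsum d F = rsum d G.
Proof.
  induction d; simpl; intros H; auto.
  rewrite IHd by (intros; apply H; lia). rewrite H by lia. auto.
Qed.

Lemma rsum_plus d F G : rsum d (fun m => F m + G m) = rsum d F + rsum d G.
Proof. induction d; simpl; [lra | rewrite IHd; lra]. Qed.

Lemma rsum_minus d F G : rsum d (fun m => F m - G m) = rsum d F - rsum d G.
Proof. induction d; simpl; [lra | rewrite IHd; lra]. Qed.

Lemma rsum_scal d c F : rsum d (fun m => c * F m) = c * rsum d F.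
Proof. induction d; simpl; [lra | rewrite IHd; lra]. Qed.

Lemma rsum_zero d : rsum d (fun _ => 0) = 0.
Proof. induction d; simpl; [lra | rewrite IHd; lra]. Qed.

Lemma rsum_const d c : rsum d (fun _ => c) = INR d * c.
Proof. induction d; simpl rsum; [simpl; ring |]. rewrite IHd, S_INR. ring. Qed.

Lemma rsum_le d F G : (forall m, (m < d)%nat -> F m <= G m) -> rsum d F <= rsum d G.
Proof.
  induction d; simpl; intros H; [lra |].
  pose proof (H d ltac:(lia)). pose proof (IHd ltac:(intros; apply H; lia)). lra.
Qed.

Lemma rsum_lt d F G :
  (0 < d)%nat -> (forall m, (m < d)%nat -> F m < G m) -> rsum d F < rsum d G.
Proof.
  intros Hd H. destruct d; [lia |]. simpl.
  assert (rsum d F <= rsum d G) by (apply rsum_le; intros; apply Rlt_le, H; lia).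
  pose proof (H d ltac:(lia)). lra.
Qed.

Lemma rsum_nonneg d F : (forall m, (m < d)%nat -> 0 <= F m) -> 0 <= rsum d F.
Proof. intros H. rewrite <- (rsum_zero d). apply rsum_le; auto. Qed.

Lemma rsum_shift d F : rsum (S d) F = F O + rsum d (fun m => F (S m)).
Proof. induction d; simpl in *; [lra |]. rewrite IHd. lra. Qed.

Lemma rsum_term_le d F k :
  (forall m, (m < d)%nat -> 0 <= F m) -> (k < d)%nat -> F k <= rsum d F.
Proof.
  induction d; intros H Hk; simpl; [lia |].
  assert (0 <= rsum d F) by (apply rsum_nonneg; intros; apply H; lia).
  destruct (Nat.eq_dec k d) as [-> | Hkd]; [lra |].
  pose proof (IHd ltac:(intros; apply H; lia) ltac:(lia)). pose proof (H d ltac:(lia)). lra.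
Qed.

Lemma rsum_zero_inv d F :
  (forall m, (m < d)%nat -> 0 <= F m) -> rsum d F <= 0 -> forall k, (k < d)%nat -> F k = 0.
Proof. intros H Hs k Hk. pose proof (rsum_term_le d F k H Hk). pose proof (H k Hk). lra. Qed.

Lemma rsum_indicator0 d F :
  (0 < d)%nat -> rsum d (fun m => (if Nat.eqb m 0 then 1 else 0) * F m) = F O.
Proof.
  intros Hd. destruct d; [lia |]. rewrite rsum_shift. simpl.
  rewrite (rsum_ext _ _ (fun _ => 0)) by (intros; simpl; lra). rewrite rsum_zero. lra.
Qed.

Lemma rsum_if n j A B :
  (j < n)%nat -> rsum n (fun i => if Nat.eqb i j then A else B) = A + (INR n - 1) * B.
Proof.
  revert j. induction n; intros j Hj; [lia |]. simpl rsum. rewrite S_INR.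
  destruct (Nat.eqb_spec n j) as [-> | Hnj].
  - rewrite (rsum_ext _ _ (fun _ => B)), rsum_const; [ring |].
    intros m Hm. destruct (Nat.eqb_spec m j); [lia | auto].
  - rewrite IHn by lia. ring.
Qed.

Lemma rsum_weighted_if n j (p : nat -> R) c :
  (j < n)%nat ->
  rsum n (fun i => p i * (if Nat.eqb i j then c else 1)) = rsum n p + p j * (c - 1).
Proof.
  revert j. induction n; intros j H; [lia |]. simpl rsum.
  destruct (Nat.eqb_spec n j).
  - subst j. rewrite (rsum_ext n _ p); [ring |].
    intros m Hm. destruct (Nat.eqb_spec m n); [lia | ring].
  - rewrite IHn by lia. ring.
Qed.

Lemma exists_small_weight n p :
  (0 < n)%nat -> rsum n p = 1 -> exists j, (j < n)%nat /\ p j <= / INR n.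
Proof.
  intros Hn Hs. apply NNPP. intros C.
  assert (H : forall m, (m < n)%nat -> / INR n < p m).
  { intros m Hm. apply Rnot_le_lt. intros Hle. apply C. exists m. auto. }
  pose proof (rsum_lt n _ _ Hn H) as Hlt.
  rewrite rsum_const, Rinv_r in Hlt by (apply not_0_INR; lia). lra.
Qed.

Lemma sum_lt_rsum n F : sum_lt n F = rsum n F.
Proof.
  unfold sum_lt. induction n; [simpl; auto |].
  rewrite seq_S, map_app, fold_right_app. simpl. cbn [rsum]. rewrite <- IHn.
  generalize (F n). clear. intros r. induction (map F (seq 0 n)); simpl; lra.
Qed.

(** Coordinates: [coord x m] is the m-th entry of [x : vec d] (0 when m >= d),
    and [vec_of d F] the vector with entries F 0, ..., F (d-1). *)
Definition coord {d} (x : Fin.t d -> R) (m : nat) : R :=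
  match lt_dec m d with left h => x (Fin.of_nat_lt h) | right _ => 0 end.
Definition fin_index {d} (i : Fin.t d) : nat := proj1_sig (Fin.to_nat i).
Definition vec_of (d : nat) (F : nat -> R) : vec d := fun i => F (fin_index i).

Lemma fin_index_lt {d} (i : Fin.t d) : (fin_index i < d)%nat.
Proof. unfold fin_index. destruct (Fin.to_nat i); simpl; auto. Qed.

Lemma coord_out {d} (x : Fin.t d -> R) m : (d <= m)%nat -> coord x m = 0.
Proof. intros H. unfold coord. destruct (lt_dec m d); [lia | auto]. Qed.

Lemma coord_fin {d} (x : Fin.t d -> R) i : coord x (fin_index i) = x i.
Proof.
  unfold coord. destruct (lt_dec (fin_index i) d) as [h | h].
  - f_equal. rewrite <- (Fin.of_nat_to_nat_inv i). unfold fin_index in h |- *.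
    apply Fin.of_nat_ext.
  - exfalso. apply h, fin_index_lt.
Qed.

Lemma coord_vec_of d F m : (m < d)%nat -> coord (vec_of d F) m = F m.
Proof.
  intros H. unfold coord. destruct (lt_dec m d); [| lia].
  unfold vec_of, fin_index. rewrite Fin.to_nat_of_nat. reflexivity.
Qed.

Lemma vec_ext {d} (x y : vec d) :
  (forall m, (m < d)%nat -> coord x m = coord y m) -> x = y.
Proof.
  intros H. apply functional_extensionality. intros i.
  rewrite <- (coord_fin x), <- (coord_fin y). apply H, fin_index_lt.
Qed.

Lemma finsum_rsum d (g : Fin.t d -> R) : finsum d g = rsum d (coord g).
Proof.
  induction d; [reflexivity |].
  simpl finsum. rewrite rsum_shift, IHd.
  assert (E1 : g Fin.F1 = coord g 0).
  { unfold coord. destruct (lt_dec 0 (S d)); [reflexivity | lia]. }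
  assert (E2 : rsum d (coord (fun k => g (Fin.FS k))) = rsum d (fun m => coord g (S m))).
  { apply rsum_ext. intros m Hm. unfold coord.
    destruct (lt_dec m d); [| lia]. destruct (lt_dec (S m) (S d)); [| lia].
    simpl. f_equal. f_equal. apply Fin.of_nat_ext. }
  rewrite E1, E2. reflexivity.
Qed.

Lemma coord_vadd {d} (x y : vec d) m : coord (vadd x y) m = coord x m + coord y m.
Proof. unfold coord, vadd. destruct (lt_dec m d); lra. Qed.
Lemma coord_vsub {d} (x y : vec d) m : coord (vsub x y) m = coord x m - coord y m.
Proof. unfold coord, vsub. destruct (lt_dec m d); lra. Qed.
Lemma coord_vscale {d} c (x : vec d) m : coord (vscale c x) m = c * coord x m.
Proof. unfold coord, vscale. destruct (lt_dec m d); lra. Qed.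
Lemma coord_vzero {d} m : coord (@vzero d) m = 0.
Proof. unfold coord, vzero. destruct (lt_dec m d); lra. Qed.

Lemma inner_rsum {d} (x y : vec d) : inner x y = rsum d (fun m => coord x m * coord y m).
Proof.
  unfold inner. rewrite finsum_rsum. apply rsum_ext. intros m Hm.
  unfold coord. destruct (lt_dec m d); lra.
Qed.

Lemma sqnorm_rsum {d} (x : vec d) : sqnorm x = rsum d (fun m => coord x m ^ 2).
Proof. unfold sqnorm. rewrite inner_rsum. apply rsum_ext; intros; ring. Qed.

Lemma sqnorm_nonneg {d} (x : vec d) : 0 <= sqnorm x.
Proof. rewrite sqnorm_rsum. apply rsum_nonneg. intros; nra. Qed.

Lemma sqnorm_vnorm {d} (h : vec d) : sqnorm h = vnorm h ^ 2.
Proof. unfold vnorm. rewrite pow2_sqrt; auto. apply sqnorm_nonneg. Qed.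

Lemma vsub_vadd {d} (x h : vec d) : vsub (vadd x h) x = h.
Proof. apply functional_extensionality; intro; unfold vsub, vadd; ring. Qed.

Lemma inner_sym {d} (x y : vec d) : inner x y = inner y x.
Proof. rewrite !inner_rsum. apply rsum_ext; intros; ring. Qed.
Lemma inner_addl {d} (x y z : vec d) : inner (vadd x y) z = inner x z + inner y z.
Proof. rewrite !inner_rsum, <- rsum_plus. apply rsum_ext; intros; rewrite coord_vadd; ring. Qed.
Lemma inner_subl {d} (x y z : vec d) : inner (vsub x y) z = inner x z - inner y z.
Proof. rewrite !inner_rsum, <- rsum_minus. apply rsum_ext; intros; rewrite coord_vsub; ring. Qed.
Lemma inner_scall {d} c (x z : vec d) : inner (vscale c x) z = c * inner x z.
Proof. rewrite !inner_rsum, <- rsum_scal. apply rsum_ext; intros; rewrite coord_vscale; ring. Qed.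
Lemma inner_addr {d} (x y z : vec d) : inner z (vadd x y) = inner z x + inner z y.
Proof. rewrite (inner_sym z), inner_addl, !(inner_sym z). auto. Qed.
Lemma inner_subr {d} (x y z : vec d) : inner z (vsub x y) = inner z x - inner z y.
Proof. rewrite (inner_sym z), inner_subl, !(inner_sym z). auto. Qed.
Lemma inner_scalr {d} c (x z : vec d) : inner z (vscale c x) = c * inner z x.
Proof. rewrite (inner_sym z), inner_scall, !(inner_sym z). auto. Qed.

(** A chain [p] has diagonal weights [diag p m], link
    weights [link p m] (coupling y_m and y_{m+1}) and a linear term [lin p m];
    on the first d coordinates its value is
      cval d p y = sum_{m<d} diag_m/2 y_m^2 - lin_m y_m + link_m/2 (y_m - y_{m+1})^2. *)
Record chain := mkChain { diag : nat -> R; link : nat -> R; lin : nat -> R }.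

Definition prev_link (l : nat -> R) (m : nat) : R :=
  match m with O => 0 | S m' => l m' end.

Definition cval d p (y : nat -> R) : R :=
  rsum d (fun m => diag p m / 2 * y m ^ 2 - lin p m * y m + link p m / 2 * (y m - y (S m)) ^ 2).

(* The partial derivatives of [cval] ... *)
Definition cgrad p (y : nat -> R) (m : nat) : R :=
  diag p m * y m + link p m * (y m - y (S m)) + prev_link (link p) m * (y m - y (pred m)) - lin p m.

(* ... the (constant) Hessian applied to a direction z ... *)
Definition hess_apply p (z : nat -> R) (m : nat) : R :=
  diag p m * z m + link p m * (z m - z (S m)) + prev_link (link p) m * (z m - z (pred m)).

(* ... and the associated quadratic form, i.e. half the Hessian norm of z. *)
Definition cform d p (z : nat -> R) : R :=
  rsum d (fun m => diag p m / 2 * z m ^ 2 + link p m / 2 * (z m - z (S m)) ^ 2).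

Definition links_below d (l : nat -> R) : Prop := forall m, (pred d <= m)%nat -> l m = 0.

#[local] Hint Resolve pow2_ge_0 : core.
Ltac nonneg_tac :=
  repeat (first [lra | apply pow2_ge_0 | apply Rmult_le_pos | apply Rplus_le_le_0_compat]); lra.

Lemma prev_link_nonneg l m : (forall m, 0 <= l m) -> 0 <= prev_link l m.
Proof. intros H. destruct m; simpl; [lra | auto]. Qed.

Lemma rsum_shift_link d l phi :
  links_below d l -> rsum d (fun m => l m * phi (S m)) = rsum d (fun m => prev_link l m * phi m).
Proof.
  intros Hb. pose proof (rsum_shift d (fun m => prev_link l m * phi m)) as E.
  cbn [rsum] in E. destruct d as [| d']; [reflexivity |].
  cbn [prev_link] in E. rewrite (Hb d') in E by (simpl; lia). lra.
Qed.

Lemma summation_by_parts d l y z :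
  links_below d l ->
  rsum d (fun m => l m * (y m - y (S m)) * (z m - z (S m))) =
  rsum d (fun m => (l m * (y m - y (S m)) + prev_link l m * (y m - y (pred m))) * z m).
Proof.
  intros Hb.
  pose proof (rsum_shift_link d l (fun k => (y (pred k) - y k) * z k) Hb) as E. simpl in E.
  transitivity (rsum d (fun m => l m * (y m - y (S m)) * z m)
                - rsum d (fun m => l m * ((y m - y (S m)) * z (S m)))).
  { rewrite <- rsum_minus. apply rsum_ext; intros; ring. }
  rewrite E, <- rsum_minus. apply rsum_ext; intros; ring.
Qed.

Lemma cval_expand d p y z :
  links_below d (link p) ->
  cval d p (fun m => y m + z m) = cval d p y + rsum d (fun m => cgrad p y m * z m) + cform d p z.
Proof.
  intros Hb.
  rewrite (rsum_ext d (fun m => cgrad p y m * z m)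
             (fun m => (diag p m * y m - lin p m) * z m
                       + (link p m * (y m - y (S m)) + prev_link (link p) m * (y m - y (pred m))) * z m))
    by (intros; unfold cgrad; ring).
  rewrite rsum_plus, <- summation_by_parts by auto.
  unfold cval, cform. rewrite <- !rsum_plus. apply rsum_ext; intros; field.
Qed.

Lemma cform_lower d p z c :
  (forall m, (m < d)%nat -> c <= diag p m) -> (forall m, 0 <= link p m) ->
  c / 2 * rsum d (fun m => z m ^ 2) <= cform d p z.
Proof.
  intros H1 H2. rewrite <- rsum_scal. apply rsum_le. intros m Hm.
  pose proof (H1 m Hm). pose proof (H2 m).
  assert (0 <= link p m / 2 * (z m - z (S m)) ^ 2) by nonneg_tac.
  assert (0 <= (diag p m - c) * z m ^ 2) by (apply Rmult_le_pos; auto; lra).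
  cbv beta. lra.
Qed.

Lemma cform_nonneg d p z :
  (forall m, 0 <= diag p m) -> (forall m, 0 <= link p m) -> 0 <= cform d p z.
Proof.
  intros H1 H2. apply rsum_nonneg. intros m Hm. pose proof (H1 m). pose proof (H2 m).
  assert (0 <= diag p m / 2 * z m ^ 2) by nonneg_tac.
  assert (0 <= link p m / 2 * (z m - z (S m)) ^ 2) by nonneg_tac. lra.
Qed.

Lemma link_energy_upper d l z :
  links_below d l -> (forall m, 0 <= l m) ->
  rsum d (fun m => l m * (z m - z (S m)) ^ 2)
  <= 2 * rsum d (fun m => (l m + prev_link l m) * z m ^ 2).
Proof.
  intros Hb Hl.
  apply Rle_trans with (rsum d (fun m => 2 * (l m * z m ^ 2))
                        + rsum d (fun m => 2 * (l m * (z (S m) ^ 2)))).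
  { rewrite <- rsum_plus. apply rsum_le. intros m _. pose proof (Hl m).
    assert (0 <= l m * (z m + z (S m)) ^ 2) by nonneg_tac. cbv beta. nra. }
  rewrite !rsum_scal, (rsum_shift_link d l (fun k => z k ^ 2)) by auto.
  rewrite <- Rmult_plus_distr_l, <- rsum_plus.
  apply Req_le. f_equal. apply rsum_ext; intros; ring.
Qed.

Lemma cform_upper d p z :
  links_below d (link p) -> (forall m, 0 <= diag p m) -> (forall m, 0 <= link p m) ->
  cform d p z <= rsum d (fun m => (diag p m / 2 + link p m + prev_link (link p) m) * z m ^ 2).
Proof.
  intros Hb H1 H2. unfold cform. rewrite rsum_plus.
  rewrite (rsum_ext d (fun m => link p m / 2 * (z m - z (S m)) ^ 2)
             (fun m => / 2 * (link p m * (z m - z (S m)) ^ 2))) by (intros; field).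
  rewrite rsum_scal. pose proof (link_energy_upper d (link p) z Hb H2).
  rewrite (rsum_ext d (fun m => (diag p m / 2 + link p m + prev_link (link p) m) * z m ^ 2)
             (fun m => diag p m / 2 * z m ^ 2 + (link p m + prev_link (link p) m) * z m ^ 2))
    by (intros; ring).
  rewrite rsum_plus. lra.
Qed.

Lemma cauchy_schwarz3 a b c X Y Z :
  0 <= a -> 0 <= b -> 0 <= c ->
  (a * X + b * Y + c * Z) ^ 2 <= (a + b + c) * (a * X ^ 2 + b * Y ^ 2 + c * Z ^ 2).
Proof.
  intros. assert (0 <= a * b * (X - Y) ^ 2 + a * c * (X - Z) ^ 2 + b * c * (Y - Z) ^ 2)
    by nonneg_tac.
  nra.
Qed.

(* Writing Hess = mu0 I + P with P >= 0,
   one has |P z|^2 <= 2w <P z, z> and <P z, z> <= 2w |z|^2. *)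
Lemma hess_apply_bound d p z mu0 w :
  links_below d (link p) -> 0 <= mu0 -> 0 <= w ->
  (forall m, (m < d)%nat -> mu0 <= diag p m) -> (forall m, 0 <= link p m) ->
  (forall m, (m < d)%nat -> (diag p m - mu0) + link p m + prev_link (link p) m <= w) ->
  rsum d (fun m => hess_apply p z m ^ 2) <= (mu0 + 2 * w) ^ 2 * rsum d (fun m => z m ^ 2).
Proof.
  intros Hb Hm Hw Ha Hl Hr.
  set (th := fun m => diag p m - mu0).
  set (P := fun m => th m * z m + link p m * (z m - z (S m))
                     + prev_link (link p) m * (z m - z (pred m))).
  set (S0 := rsum d (fun m => z m ^ 2)).
  set (E := rsum d (fun m => P m * z m)).
  set (T := rsum d (fun m => th m * z m ^ 2)).
  set (Lk := rsum d (fun m => link p m * (z m - z (S m)) ^ 2)).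
  assert (HE : E = T + Lk).
  { unfold E, T, Lk.
    rewrite (rsum_ext d (fun m => link p m * (z m - z (S m)) ^ 2)
               (fun m => link p m * (z m - z (S m)) * (z m - z (S m)))) by (intros; ring).
    rewrite (summation_by_parts d (link p) z z Hb), <- rsum_plus.
    apply rsum_ext; intros; unfold P; ring. }
  assert (HT : 0 <= T) by (apply rsum_nonneg; intros m Hm'; unfold th; pose proof (Ha m Hm'); nonneg_tac).
  assert (HL : 0 <= Lk) by (apply rsum_nonneg; intros m _; pose proof (Hl m); nonneg_tac).
  assert (HS : 0 <= S0) by (apply rsum_nonneg; intros; nonneg_tac).
  assert (HEb : E <= 2 * w * S0).
  { rewrite HE. pose proof (link_energy_upper d (link p) z Hb Hl).
    apply Rle_trans with (T + 2 * rsum d (fun m => (link p m + prev_link (link p) m) * z m ^ 2));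
      [unfold Lk; lra |].
    unfold T, S0. rewrite <- rsum_scal, <- rsum_plus, <- rsum_scal. apply rsum_le. intros m Hm'.
    pose proof (Hr m Hm'). pose proof (Hl m). pose proof (prev_link_nonneg (link p) m Hl).
    pose proof (Ha m Hm'). pose proof (pow2_ge_0 (z m)). unfold th. nra. }
  assert (HP : rsum d (fun m => P m ^ 2) <= 2 * w * E).
  { apply Rle_trans with (rsum d (fun m => w * (th m * z m ^ 2 + link p m * (z m - z (S m)) ^ 2
                                               + prev_link (link p) m * (z m - z (pred m)) ^ 2))).
    { apply rsum_le. intros m Hm'. unfold P.
      pose proof (Ha m Hm'). pose proof (Hl m). pose proof (prev_link_nonneg (link p) m Hl).
      eapply Rle_trans; [apply cauchy_schwarz3; unfold th; lra |].
      apply Rmult_le_compat_r; [unfold th; nonneg_tac | apply Hr; auto]. }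
    assert (Hprev : rsum d (fun m => prev_link (link p) m * (z m - z (pred m)) ^ 2) = Lk).
    { unfold Lk. rewrite <- (rsum_shift_link d (link p) (fun k => (z k - z (pred k)) ^ 2) Hb).
      apply rsum_ext; intros; simpl; ring. }
    rewrite rsum_scal, !rsum_plus, Hprev. fold T Lk. rewrite HE. nra. }
  assert (HM : rsum d (fun m => hess_apply p z m ^ 2) = mu0 ^ 2 * S0 + 2 * mu0 * E + rsum d (fun m => P m ^ 2)).
  { unfold S0, E. rewrite <- !rsum_scal, <- !rsum_plus. apply rsum_ext; intros.
    unfold hess_apply, P, th. ring. }
  rewrite HM. fold S0. nra.
Qed.

(** Explicit minimiser.  When no two links are adjacent, the stationarity
    equations decouple into 1x1 and 2x2 systems; [cmin p] solves them. *)
Definition cmin (p : chain) (m : nat) : R :=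
  if Req_EM_T (link p m) 0 then
    ((diag p (pred m) + prev_link (link p) m) * lin p m + prev_link (link p) m * lin p (pred m)) /
      (diag p m * diag p (pred m) + prev_link (link p) m * (diag p m + diag p (pred m)))
  else
    ((diag p (S m) + link p m) * lin p m + link p m * lin p (S m)) /
      (diag p m * diag p (S m) + link p m * (diag p m + diag p (S m))).

Lemma cmin_unlinked p m :
  link p m = 0 ->
  cmin p m =
    ((diag p (pred m) + prev_link (link p) m) * lin p m + prev_link (link p) m * lin p (pred m)) /
      (diag p m * diag p (pred m) + prev_link (link p) m * (diag p m + diag p (pred m))).
Proof. intros H. unfold cmin. destruct (Req_EM_T (link p m) 0); [reflexivity | contradiction]. Qed.

Lemma cmin_linked p m :
  link p m <> 0 ->
  cmin p m =
    ((diag p (S m) + link p m) * lin p m + link p m * lin p (S m)) /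
      (diag p m * diag p (S m) + link p m * (diag p m + diag p (S m))).
Proof. intros H. unfold cmin. destruct (Req_EM_T (link p m) 0); [contradiction | reflexivity]. Qed.

Lemma cmin_grad p :
  (forall m, 0 < diag p m) -> (forall m, 0 <= link p m) ->
  (forall m, link p m = 0 \/ link p (S m) = 0) -> forall m, cgrad p (cmin p) m = 0.
Proof.
  intros Ha Hl Hn m. unfold cgrad.
  destruct (Req_EM_T (link p m) 0) as [h0 | h0].
  - rewrite h0, (cmin_unlinked p m h0). destruct m as [| m'].
    + simpl. pose proof (Ha 0%nat). field. lra.
    + simpl prev_link. simpl pred.
      pose proof (Ha m'). pose proof (Ha (S m')). pose proof (Hl m').
      destruct (Req_EM_T (link p m') 0) as [h1 | h1].
      * rewrite h1. field. lra.
      * rewrite (cmin_linked p m' h1).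
        assert (0 < diag p (S m') * diag p m' + link p m' * (diag p (S m') + diag p m')) by nra.
        assert (0 < diag p m' * diag p (S m') + link p m' * (diag p m' + diag p (S m'))) by nra.
        field; repeat split; lra.
  - assert (hS : link p (S m) = 0) by (destruct (Hn m); auto; contradiction).
    assert (hL : prev_link (link p) m = 0).
    { destruct m as [| m']; simpl; auto. destruct (Hn m'); auto. contradiction. }
    rewrite hL, (cmin_linked p m h0), (cmin_unlinked p (S m) hS). simpl prev_link. simpl pred.
    pose proof (Ha m). pose proof (Ha (S m)). pose proof (Hl m).
    assert (0 < diag p (S m) * diag p m + link p m * (diag p (S m) + diag p m)) by nra.
    assert (0 < diag p m * diag p (S m) + link p m * (diag p m + diag p (S m))) by nra.
    field; repeat split; lra.
Qed.

Lemma cval_restrict d p y y' :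
  links_below d (link p) -> (forall m, (m < d)%nat -> y m = y' m) -> cval d p y = cval d p y'.
Proof.
  intros Hb H. unfold cval. apply rsum_ext. intros m Hm. rewrite (H m Hm).
  destruct (Nat.lt_ge_cases (S m) d).
  - rewrite (H (S m)); auto.
  - rewrite (Hb m) by lia. field.
Qed.

Lemma cgrad_sub p y y' m : cgrad p y m - cgrad p y' m = hess_apply p (fun k => y k - y' k) m.
Proof. unfold cgrad, hess_apply. ring. Qed.

(** Gradients and minimisers of a chain extend the support by at most one
    coordinate, and by none when no link enters coordinate K. *)
Definition vanish_from K (y : nat -> R) : Prop := forall m, (K <= m)%nat -> y m = 0.

Lemma vanish_from_mono K K' y : (K <= K')%nat -> vanish_from K y -> vanish_from K' y.
Proof. intros H1 H2 m Hm. apply H2. lia. Qed.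

Lemma cmin_vanish p K : vanish_from K (lin p) -> vanish_from (S K) (cmin p).
Proof.
  intros Hb m Hm. unfold cmin. destruct (Req_EM_T (link p m) 0).
  - rewrite (Hb m), (Hb (pred m)) by lia. unfold Rdiv. ring.
  - rewrite (Hb m), (Hb (S m)) by lia. unfold Rdiv. ring.
Qed.

Lemma cmin_vanish_tight p K :
  vanish_from K (lin p) -> prev_link (link p) K = 0 -> vanish_from K (cmin p).
Proof.
  intros Hb HL m Hm. destruct (Nat.eq_dec m K) as [-> | hne].
  - unfold cmin. destruct (Req_EM_T (link p K) 0).
    + rewrite HL, (Hb K) by lia. unfold Rdiv. ring.
    + rewrite (Hb K), (Hb (S K)) by lia. unfold Rdiv. ring.
  - apply (cmin_vanish p K Hb). lia.
Qed.

Lemma cgrad_vanish p y K :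
  vanish_from K y -> vanish_from K (lin p) -> vanish_from (S K) (cgrad p y).
Proof. intros Hy Hb m Hm. unfold cgrad. rewrite (Hy m), (Hy (S m)), (Hy (pred m)), (Hb m) by lia. ring. Qed.

Lemma cgrad_vanish_tight p y K :
  vanish_from K y -> vanish_from K (lin p) -> prev_link (link p) K = 0 ->
  vanish_from K (cgrad p y).
Proof.
  intros Hy Hb HL m Hm. destruct (Nat.eq_dec m K) as [-> | hne].
  - unfold cgrad. rewrite HL, (Hy K), (Hy (S K)), (Hb K) by lia. ring.
  - apply (cgrad_vanish p y K Hy Hb). lia.
Qed.

(** The Householder reflection exchanging x0 / |x0| and the first axis.  It is
    a linear involutive isometry, and it sends x0 onto the first axis, so that
    coordinates [refl x0 (x - x0)] place the initial point at the origin while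
    the span of x0 stays supported on the first coordinate. *)
Definition e0 d : vec d := vec_of d (fun m => if Nat.eqb m 0 then 1 else 0).
Definition refl_axis {d} (x0 : vec d) : vec d := vsub x0 (vscale (vnorm x0) (e0 d)).
Definition refl {d} (x0 : vec d) (v : vec d) : vec d :=
  if Req_EM_T (sqnorm (refl_axis x0)) 0 then v
  else vsub v (vscale (2 * inner (refl_axis x0) v / sqnorm (refl_axis x0)) (refl_axis x0)).

Section Reflection.
Context {d : nat} (x0 : vec d).

Lemma refl_add u v : refl x0 (vadd u v) = vadd (refl x0 u) (refl x0 v).
Proof.
  unfold refl. destruct (Req_EM_T (sqnorm (refl_axis x0)) 0); auto.
  rewrite inner_addr. apply functional_extensionality; intro k.
  unfold vadd, vsub, vscale. field. auto.
Qed.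

Lemma refl_scale c v : refl x0 (vscale c v) = vscale c (refl x0 v).
Proof.
  unfold refl. destruct (Req_EM_T (sqnorm (refl_axis x0)) 0); auto.
  rewrite inner_scalr. apply functional_extensionality; intro k.
  unfold vsub, vscale. field. auto.
Qed.

Lemma refl_sub u v : refl x0 (vsub u v) = vsub (refl x0 u) (refl x0 v).
Proof.
  unfold refl. destruct (Req_EM_T (sqnorm (refl_axis x0)) 0); auto.
  rewrite inner_subr. apply functional_extensionality; intro k.
  unfold vsub, vscale. field. auto.
Qed.

Lemma refl_zero : refl x0 vzero = vzero.
Proof.
  assert (E : (@vzero d) = vscale 0 vzero)
    by (apply functional_extensionality; intro; unfold vscale, vzero; ring).
  rewrite E, refl_scale. apply functional_extensionality; intro; unfold vscale; ring.
Qed.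

Lemma refl_inner u v : inner (refl x0 u) (refl x0 v) = inner u v.
Proof.
  unfold refl. destruct (Req_EM_T (sqnorm (refl_axis x0)) 0); auto.
  rewrite !inner_subl, !inner_subr, !inner_scall, !inner_scalr. unfold sqnorm in *.
  rewrite ?(inner_sym v (refl_axis x0)), ?(inner_sym u (refl_axis x0)),
    ?(inner_sym (refl_axis x0) u).
  field. auto.
Qed.

Lemma refl_inv v : refl x0 (refl x0 v) = v.
Proof.
  unfold refl at 1. destruct (Req_EM_T (sqnorm (refl_axis x0)) 0) as [e | n].
  - unfold refl. destruct (Req_EM_T (sqnorm (refl_axis x0)) 0); auto. contradiction.
  - unfold refl. destruct (Req_EM_T (sqnorm (refl_axis x0)) 0); [contradiction |].
    rewrite inner_subr, inner_scalr. fold (sqnorm (refl_axis x0)).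
    apply functional_extensionality; intro k. unfold vsub, vscale. field. auto.
Qed.

Lemma refl_sqnorm v : sqnorm (refl x0 v) = sqnorm v.
Proof. unfold sqnorm. apply refl_inner. Qed.

Lemma refl_sym u v : inner (refl x0 u) v = inner u (refl x0 v).
Proof. rewrite <- (refl_inv v) at 1. rewrite refl_inner. auto. Qed.

Lemma coord_e0 m : (0 < d)%nat -> coord (e0 d) m = if Nat.eqb m 0 then 1 else 0.
Proof.
  intros Hd. destruct (lt_dec m d).
  - unfold e0. rewrite coord_vec_of; auto.
  - rewrite coord_out by lia. destruct (Nat.eqb_spec m 0); [lia | auto].
Qed.

Lemma refl_x0 : (0 < d)%nat -> vanish_from 1 (coord (refl x0 x0)).
Proof.
  intros Hd.
  set (r := vnorm x0).
  assert (Hr2 : sqnorm x0 = r * r).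
  { unfold r, vnorm. rewrite sqrt_sqrt; auto. apply sqnorm_nonneg. }
  assert (He0x : inner (e0 d) x0 = coord x0 0).
  { rewrite inner_rsum, <- (rsum_indicator0 d (coord x0) Hd).
    apply rsum_ext; intros m Hm. rewrite coord_e0; auto. }
  assert (He0e0 : inner (e0 d) (e0 d) = 1).
  { rewrite inner_rsum.
    transitivity (rsum d (fun m => (if Nat.eqb m 0 then 1 else 0) * (fun _ => 1) m)).
    - apply rsum_ext; intros m Hm. rewrite coord_e0; auto. destruct (Nat.eqb m 0); ring.
    - apply rsum_indicator0; auto. }
  intros m Hm. unfold refl. destruct (Req_EM_T (sqnorm (refl_axis x0)) 0) as [e | n].
  - destruct (lt_dec m d) as [hm | hm]; [| apply coord_out; lia].
    rewrite sqnorm_rsum in e.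
    pose proof (rsum_zero_inv d _ (fun m _ => pow2_ge_0 _) (Req_le _ _ e) m hm) as Z.
    simpl in Z. unfold refl_axis in Z. rewrite coord_vsub, coord_vscale, coord_e0 in Z by auto.
    destruct (Nat.eqb_spec m 0); [lia |]. nra.
  - assert (Hw : inner (refl_axis x0) x0 = r * r - r * coord x0 0).
    { unfold refl_axis. rewrite inner_subl, inner_scall. fold (sqnorm x0).
      rewrite He0x, Hr2. fold r. ring. }
    assert (HW : sqnorm (refl_axis x0) = 2 * (r * r - r * coord x0 0)).
    { unfold sqnorm, refl_axis. rewrite !inner_subl, !inner_subr, !inner_scall, !inner_scalr.
      fold (sqnorm x0). rewrite (inner_sym x0 (e0 d)), He0x, He0e0, Hr2. fold r. ring. }
    rewrite coord_vsub, coord_vscale, Hw, HW. unfold refl_axis.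
    rewrite coord_vsub, coord_vscale, (coord_e0 m) by auto.
    destruct (Nat.eqb_spec m 0); [lia |].
    destruct (lt_dec m d) as [hm | hm]; [| rewrite !coord_out by lia; ring].
    assert (r * r - r * coord x0 0 <> 0) by (intro X; apply n; rewrite HW, X; ring).
    field. auto.
Qed.
End Reflection.

Section Lift.
Context {d : nat} (x0 : vec d).

Definition ycoord (x : vec d) : nat -> R := coord (refl x0 (vsub x x0)).
Definition qfun (p : chain) (x : vec d) : R := cval d p (ycoord x).
Definition qgrad (p : chain) (x : vec d) : vec d := refl x0 (vec_of d (cgrad p (ycoord x))).

(* Proximal objective of [p] at z with step g, as a chain: it adds 1/g to the
   diagonal and z/g to the linear term. *)
Definition prox_chain (p : chain) (g : R) (z : nat -> R) : chain :=
  mkChain (fun m => diag p m + / g) (link p) (fun m => lin p m + z m / g).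
Definition qprox (p : chain) (g : R) (x : vec d) : vec d :=
  vadd x0 (refl x0 (vec_of d (cmin (prox_chain p g (ycoord x))))).

Lemma ycoord_shift x y m : ycoord y m = ycoord x m + coord (refl x0 (vsub y x)) m.
Proof.
  unfold ycoord. assert (E : vsub y x0 = vadd (vsub x x0) (vsub y x)).
  { apply functional_extensionality; intro; unfold vsub, vadd; ring. }
  rewrite E, refl_add, coord_vadd. auto.
Qed.

Lemma ycoord_of F : forall m, (m < d)%nat -> ycoord (vadd x0 (refl x0 (vec_of d F))) m = F m.
Proof.
  intros m Hm. unfold ycoord. rewrite vsub_vadd, refl_inv, coord_vec_of; auto.
Qed.

Lemma inner_vec_of G (v : vec d) : inner (vec_of d G) v = rsum d (fun m => G m * coord v m).
Proof. rewrite inner_rsum. apply rsum_ext; intros. rewrite coord_vec_of; auto. Qed.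

Lemma rsum_refl v : rsum d (fun m => coord (refl x0 v) m ^ 2) = sqnorm v.
Proof. rewrite <- sqnorm_rsum. apply refl_sqnorm. Qed.

Lemma qfun_expand p x y :
  links_below d (link p) ->
  qfun p y - qfun p x - inner (qgrad p x) (vsub y x) = cform d p (coord (refl x0 (vsub y x))).
Proof.
  intros Hb. unfold qfun at 1.
  replace (ycoord y) with (fun m => ycoord x m + coord (refl x0 (vsub y x)) m)
    by (apply functional_extensionality; intro; rewrite (ycoord_shift x y); auto).
  rewrite cval_expand by auto. unfold qgrad. rewrite refl_sym, inner_vec_of. unfold qfun. ring.
Qed.

Lemma qfun_gradient p :
  links_below d (link p) -> (forall m, 0 <= diag p m) -> (forall m, 0 <= link p m) ->
  has_gradient (qfun p) (qgrad p).
Proof.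
  intros Hb Ha Hl x eps Heps.
  set (co := fun m => diag p m / 2 + link p m + prev_link (link p) m).
  assert (Hco : forall m, 0 <= co m).
  { intros m. unfold co. pose proof (Ha m). pose proof (Hl m).
    pose proof (prev_link_nonneg (link p) m Hl). lra. }
  set (Cb := rsum d co + 1).
  assert (HCb : 0 < Cb) by (unfold Cb; pose proof (rsum_nonneg d co (fun m _ => Hco m)); lra).
  exists (eps / Cb). split; [apply Rdiv_lt_0_compat; auto |].
  intros h Hh. pose proof (qfun_expand p x (vadd x h) Hb) as E. rewrite vsub_vadd in E.
  set (dl := coord (refl x0 h)) in E.
  assert (R0 : 0 <= cform d p dl) by (apply cform_nonneg; auto).
  assert (R1 : cform d p dl <= Cb * sqnorm h).
  { eapply Rle_trans; [apply cform_upper; auto |].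
    rewrite <- (rsum_refl h). fold dl. rewrite <- rsum_scal. apply rsum_le. intros m Hm.
    pose proof (rsum_term_le d co m (fun m _ => Hco m) Hm). fold (co m). unfold Cb.
    apply Rmult_le_compat_r; [apply pow2_ge_0 | lra]. }
  rewrite Rabs_pos_eq by lra. rewrite E, sqnorm_vnorm in *.
  assert (0 <= vnorm h) by apply sqrt_pos.
  assert (vnorm h * Cb <= eps).
  { apply Rmult_le_reg_r with (/ Cb); [apply Rinv_0_lt_compat; auto |].
    rewrite Rmult_assoc, Rinv_r by lra. unfold Rdiv in Hh. lra. }
  nra.
Qed.

Lemma qfun_strongly_convex p c x y :
  links_below d (link p) -> (forall m, (m < d)%nat -> c <= diag p m) -> (forall m, 0 <= link p m) ->
  qfun p y >= qfun p x + inner (qgrad p x) (vsub y x) + c / 2 * sqnorm (vsub y x).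
Proof.
  intros Hb Ha Hl. pose proof (qfun_expand p x y Hb).
  pose proof (cform_lower d p (coord (refl x0 (vsub y x))) c Ha Hl) as L.
  rewrite rsum_refl in L. lra.
Qed.

Lemma qgrad_lipschitz p mu0 w x y :
  links_below d (link p) -> 0 <= mu0 -> 0 <= w ->
  (forall m, (m < d)%nat -> mu0 <= diag p m) -> (forall m, 0 <= link p m) ->
  (forall m, (m < d)%nat -> (diag p m - mu0) + link p m + prev_link (link p) m <= w) ->
  sqnorm (vsub (qgrad p x) (qgrad p y)) <= (mu0 + 2 * w) ^ 2 * sqnorm (vsub x y).
Proof.
  intros Hb H0 H1 H2 H3 H4. unfold qgrad.
  rewrite <- refl_sub, refl_sqnorm, sqnorm_rsum, <- (rsum_refl (vsub x y)).
  eapply Rle_trans; [| apply (hess_apply_bound d p (coord (refl x0 (vsub x y))) mu0 w); auto].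
  apply Req_le. apply rsum_ext. intros m Hm.
  rewrite coord_vsub, !coord_vec_of, cgrad_sub by auto.
  f_equal. f_equal. apply functional_extensionality; intro k. rewrite (ycoord_shift y x k). ring.
Qed.

Definition prox_obj p g x v := qfun p v + / (2 * g) * sqnorm (vsub x v).

Lemma prox_obj_chain p g x v :
  0 < g ->
  prox_obj p g x v
  = cval d (prox_chain p g (ycoord x)) (ycoord v) + / (2 * g) * rsum d (fun m => ycoord x m ^ 2).
Proof.
  intros Hg. unfold prox_obj, qfun. rewrite <- (refl_sqnorm x0 (vsub x v)), sqnorm_rsum.
  rewrite (rsum_ext d (fun m => coord (refl x0 (vsub x v)) m ^ 2) (fun m => (ycoord x m - ycoord v m) ^ 2))
    by (intros; rewrite (ycoord_shift v x); ring).
  unfold cval. rewrite <- !rsum_scal, <- !rsum_plus. apply rsum_ext; intros; simpl. field. lra.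
Qed.

Lemma prox_obj_split p g x v :
  links_below d (link p) -> (forall m, 0 <= diag p m) -> (forall m, 0 <= link p m) ->
  (forall m, link p m = 0 \/ link p (S m) = 0) -> 0 < g ->
  prox_obj p g x v = prox_obj p g x (qprox p g x)
    + cform d (prox_chain p g (ycoord x)) (fun m => ycoord v m - cmin (prox_chain p g (ycoord x)) m).
Proof.
  intros Hb Ha Hl Hn Hg. rewrite !prox_obj_chain by auto.
  set (p' := prox_chain p g (ycoord x)). set (P := cmin p').
  assert (Ha' : forall m, 0 < diag p' m).
  { intros m; simpl. pose proof (Ha m). pose proof (Rinv_0_lt_compat g Hg). lra. }
  assert (HG : forall m, cgrad p' P m = 0) by (apply cmin_grad; auto).
  rewrite (cval_restrict d p' (ycoord (qprox p g x)) P Hb (ycoord_of P)).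
  replace (ycoord v) with (fun m => P m + (ycoord v m - P m)) at 1
    by (apply functional_extensionality; intro; ring).
  rewrite cval_expand by auto. rewrite (rsum_ext d _ (fun _ => 0)) by (intros m _; rewrite HG; ring).
  rewrite rsum_zero. ring.
Qed.

Lemma qprox_spec p g x :
  links_below d (link p) -> (forall m, 0 <= diag p m) -> (forall m, 0 <= link p m) ->
  (forall m, link p m = 0 \/ link p (S m) = 0) -> 0 < g ->
  is_prox_unique (qfun p) g x (qprox p g x).
Proof.
  intros Hb Ha Hl Hn Hg.
  set (p' := prox_chain p g (ycoord x)). set (P := cmin p').
  assert (Hlow : forall v, / g / 2 * rsum d (fun m => (ycoord v m - P m) ^ 2)
                           <= cform d p' (fun m => ycoord v m - P m)).
  { intros v. apply cform_lower; auto. intros m _. simpl. pose proof (Ha m). lra. }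
  assert (Hg' : 0 < / g / 2) by (pose proof (Rinv_0_lt_compat g Hg); lra).
  split.
  - intros v. fold (prox_obj p g x (qprox p g x)) (prox_obj p g x v).
    rewrite (prox_obj_split p g x v) by auto. fold p' P.
    pose proof (Hlow v).
    assert (0 <= rsum d (fun m => (ycoord v m - P m) ^ 2)) by (apply rsum_nonneg; intros; auto).
    nra.
  - intros v Hv. specialize (Hv (qprox p g x)).
    fold (prox_obj p g x (qprox p g x)) (prox_obj p g x v) in Hv.
    rewrite (prox_obj_split p g x v) in Hv by auto. fold p' P in Hv. pose proof (Hlow v).
    assert (Z : forall m, (m < d)%nat -> (ycoord v m - P m) ^ 2 = 0)
      by (apply rsum_zero_inv; [intros; auto | nra]).
    assert (E1 : refl x0 (vsub v x0) = vec_of d P).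
    { apply vec_ext. intros m Hm. rewrite coord_vec_of by auto. fold (ycoord v).
      pose proof (Z m Hm). nra. }
    unfold qprox. fold p' P. rewrite <- E1, refl_inv.
    apply functional_extensionality; intro; unfold vadd, vsub; ring.
Qed.

Definition span_lt K (x : vec d) : Prop := vanish_from K (coord (refl x0 x)).

Lemma span_lt_add K u v : span_lt K u -> span_lt K v -> span_lt K (vadd u v).
Proof. intros H1 H2 m Hm. rewrite refl_add, coord_vadd, H1, H2 by auto. ring. Qed.

Lemma span_lt_scale K c u : span_lt K u -> span_lt K (vscale c u).
Proof. intros H1 m Hm. rewrite refl_scale, coord_vscale, H1 by auto. ring. Qed.

Lemma span_lt_zero K : span_lt K vzero.
Proof. intros m Hm. rewrite refl_zero, coord_vzero. auto. Qed.

Lemma span_lt_mono K K' u : (K <= K')%nat -> span_lt K u -> span_lt K' u.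
Proof. intros H1 H2. apply (vanish_from_mono K); auto. Qed.

Lemma span_lt_x0 K : (0 < d)%nat -> (1 <= K)%nat -> span_lt K x0.
Proof. intros Hd HK m Hm. apply (refl_x0 x0 Hd). lia. Qed.

Lemma vanish_vec_of K G : vanish_from K G -> vanish_from K (coord (vec_of d G)).
Proof. intros H m Hm. destruct (lt_dec m d); [rewrite coord_vec_of; auto | apply coord_out; lia]. Qed.

Lemma ycoord_vanish K x :
  (0 < d)%nat -> (1 <= K)%nat -> span_lt K x -> vanish_from K (ycoord x).
Proof.
  intros Hd HK H m Hm. unfold ycoord. rewrite refl_sub, coord_vsub, H by auto.
  rewrite (refl_x0 x0 Hd m) by lia. ring.
Qed.

Lemma qgrad_span p K x :
  (0 < d)%nat -> (1 <= K)%nat -> span_lt K x -> vanish_from K (lin p) ->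
  span_lt (S K) (qgrad p x).
Proof.
  intros Hd HK H Hb. unfold span_lt, qgrad. rewrite refl_inv.
  apply vanish_vec_of, cgrad_vanish; auto. apply ycoord_vanish; auto.
Qed.

Lemma qgrad_span_tight p K x :
  (0 < d)%nat -> (1 <= K)%nat -> span_lt K x -> vanish_from K (lin p) ->
  prev_link (link p) K = 0 -> span_lt K (qgrad p x).
Proof.
  intros Hd HK H Hb HL. unfold span_lt, qgrad. rewrite refl_inv.
  apply vanish_vec_of, cgrad_vanish_tight; auto. apply ycoord_vanish; auto.
Qed.

Lemma prox_chain_lin_vanish p g x K :
  (0 < d)%nat -> (1 <= K)%nat -> span_lt K x -> vanish_from K (lin p) ->
  vanish_from K (lin (prox_chain p g (ycoord x))).
Proof. intros Hd HK H Hb m Hm. simpl. rewrite Hb, (ycoord_vanish K x) by auto. unfold Rdiv; ring. Qed.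

Lemma qprox_span p g K x :
  (0 < d)%nat -> (1 <= K)%nat -> span_lt K x -> vanish_from K (lin p) ->
  span_lt (S K) (qprox p g x).
Proof.
  intros Hd HK H Hb m Hm. unfold qprox. rewrite refl_add, refl_inv, coord_vadd.
  rewrite (refl_x0 x0 Hd m) by lia. rewrite (vanish_vec_of (S K)); [ring | | lia].
  apply cmin_vanish, prox_chain_lin_vanish; auto.
Qed.

Lemma qprox_span_tight p g K x :
  (0 < d)%nat -> (1 <= K)%nat -> span_lt K x -> vanish_from K (lin p) ->
  prev_link (link p) K = 0 -> span_lt K (qprox p g x).
Proof.
  intros Hd HK H Hb HL m Hm. unfold qprox. rewrite refl_add, refl_inv, coord_vadd.
  rewrite (refl_x0 x0 Hd m) by lia. rewrite (vanish_vec_of K); [ring | | lia].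
  apply cmin_vanish_tight; simpl; auto. apply prox_chain_lin_vanish; auto.
Qed.
End Lift.

Section SpanInvariant.
Context {n : nat} (A : PIFO n) (d : nat) (fs : nat -> vec d -> R)
  (gs : nat -> vec d -> vec d) (px : nat -> R -> vec d -> vec d)
  (Sp : nat -> vec d -> Prop) (good : nat -> Prop) (adv : nat -> nat).
Hypothesis Sp_add : forall K u v, Sp K u -> Sp K v -> Sp K (vadd u v).
Hypothesis Sp_scale : forall K c u, Sp K u -> Sp K (vscale c u).
Hypothesis Sp_zero : forall K, Sp K vzero.
Hypothesis Sp_mono : forall K K' u, (K <= K')%nat -> Sp K u -> Sp K' u.
Hypothesis Sp_init : forall K, good K -> Sp K (init A d).
Hypothesis good_adv : forall K i, good K -> good (K + adv i)%nat.
Hypothesis Sp_grad : forall K i x, good K -> Sp K x -> Sp (K + adv i)%nat (gs i x).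
Hypothesis Sp_prox : forall K i g x, good K -> Sp K x -> Sp (K + adv i)%nat (px i g x).

Definition state_inv K (st : list (vec d) * list (oracle_ans d)) : Prop :=
  Forall (Sp K) (fst st) /\
  Forall (fun a => Sp K (ans_grad a) /\ Sp K (ans_prox a)) (snd st).

Lemma last_Forall (P : vec d -> Prop) xs x : Forall P xs -> P x -> P (last xs x).
Proof. intros H Hx. induction H; simpl; auto. destruct l; auto. Qed.

Lemma lincomb_Sp K a vs k : Forall (Sp K) vs -> Sp K (lincomb a vs k).
Proof. intros H. revert k. induction H; intros k; simpl; auto. Qed.

Lemma Forall_Sp_mono K K' l : (K <= K')%nat -> Forall (Sp K) l -> Forall (Sp K') l.
Proof. intros H1 H2. eapply Forall_impl; [| exact H2]. intros; eapply Sp_mono; eauto. Qed.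

Lemma step_inv K st i :
  good K -> state_inv K st -> state_inv (K + adv i)%nat (step A d fs gs px st i).
Proof.
  intros HC [H1 H2]. destruct st as [xs h]. simpl in H1, H2. unfold step.
  set (x := last xs (init A d)).
  assert (Hx : Sp K x) by (apply last_Forall; auto).
  set (g := gam A d (S (length h))).
  set (ans := mkAns d i (fs i x) (gs i x) (px i g x)).
  assert (Hh' : Forall (fun a => Sp (K + adv i) (ans_grad a) /\ Sp (K + adv i) (ans_prox a))
                       (h ++ [ans])).
  { apply Forall_app. split.
    - eapply Forall_impl; [| exact H2]. intros a [Ha Hb]. split; apply (Sp_mono K); auto; lia.
    - constructor; [| constructor]. simpl. split; auto. }
  destruct (rule A d (h ++ [ans])) as [[a b] c]. split; simpl; auto.
  apply Forall_app. split; [apply (Forall_Sp_mono K); auto; lia |].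
  constructor; [| constructor]. apply Sp_add.
  - apply lincomb_Sp, (Forall_Sp_mono K); auto. lia.
  - apply Sp_add; apply lincomb_Sp, Forall_map; eapply Forall_impl; try exact Hh'; simpl; tauto.
Qed.

Fixpoint total_adv (l : list nat) : nat :=
  match l with [] => O | i :: l' => (adv i + total_adv l')%nat end.

Lemma good_total_adv l : forall K, good K -> good (K + total_adv l)%nat.
Proof.
  induction l as [| i l IH]; intros K HC; simpl; [rewrite Nat.add_0_r; auto |].
  replace (K + (adv i + total_adv l))%nat with ((K + adv i) + total_adv l)%nat by lia. auto.
Qed.

Lemma fold_inv l : forall K st,
  good K -> state_inv K st -> state_inv (K + total_adv l)%nat (fold_left (step A d fs gs px) l st).
Proof.
  induction l as [| i l IH]; intros K st HC HI; simpl; [rewrite Nat.add_0_r; auto |].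
  replace (K + (adv i + total_adv l))%nat with ((K + adv i) + total_adv l)%nat by lia.
  apply IH; auto. apply step_inv; auto.
Qed.

Lemma iterate_Sp K l : good K -> Sp (K + total_adv l)%nat (iterate A d fs gs px l).
Proof.
  intros HC. unfold iterate.
  assert (I0 : state_inv K ([init A d], [])) by (split; simpl; auto).
  destruct (fold_inv l K _ HC I0) as [H1 _].
  apply last_Forall; auto. apply Sp_init, good_total_adv; auto.
Qed.
End SpanInvariant.

Definition lsum {X} (L : list X) (F : X -> R) : R := fold_right Rplus 0 (map F L).

Lemma lsum_app {X} (L1 L2 : list X) F : lsum (L1 ++ L2) F = lsum L1 F + lsum L2 F.
Proof. unfold lsum. rewrite map_app, fold_right_app. induction L1; simpl; [lra |]. rewrite IHL1. lra. Qed.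

Lemma lsum_flat_map {X Y} (g : X -> list Y) L F :
  lsum (flat_map g L) F = lsum L (fun a => lsum (g a) F).
Proof. induction L; simpl; [reflexivity |]. rewrite lsum_app, IHL. reflexivity. Qed.

Lemma lsum_map {X Y} (h : X -> Y) L F : lsum (map h L) F = lsum L (fun a => F (h a)).
Proof. unfold lsum. rewrite map_map. auto. Qed.

Lemma lsum_ext {X} (L : list X) F G : (forall a, In a L -> F a = G a) -> lsum L F = lsum L G.
Proof.
  intros H. induction L; simpl; auto. unfold lsum in *; simpl.
  rewrite H by (left; auto). rewrite IHL; auto. intros; apply H; right; auto.
Qed.

Lemma lsum_scal {X} (L : list X) c F : lsum L (fun a => c * F a) = c * lsum L F.
Proof. induction L; unfold lsum in *; simpl; [ring |]. rewrite IHL. ring. Qed.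

Lemma lsum_plus {X} (L : list X) F G : lsum L (fun a => F a + G a) = lsum L F + lsum L G.
Proof. induction L; unfold lsum in *; simpl; [ring |]. rewrite IHL. ring. Qed.

Lemma lsum_le {X} (L : list X) F G : (forall a, In a L -> F a <= G a) -> lsum L F <= lsum L G.
Proof.
  intros H. induction L; unfold lsum in *; simpl; [lra |].
  pose proof (H a (or_introl eq_refl)).
  assert (fold_right Rplus 0 (map F L) <= fold_right Rplus 0 (map G L))
    by (apply IHL; intros; apply H; right; auto).
  lra.
Qed.

Definition prod_over (phi : nat -> R) (l : list nat) : R := fold_right (fun i r => phi i * r) 1 l.

Lemma prod_over_app phi l j : prod_over phi (l ++ [j]) = prod_over phi l * phi j.
Proof. induction l; simpl; [ring |]. rewrite IHl. ring. Qed.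

Lemma prod_over_one l : prod_over (fun _ => 1) l = 1.
Proof. induction l; simpl; auto. rewrite IHl. ring. Qed.

Lemma weight_app p l j : weight p (l ++ [j]) = weight p l * p j.
Proof. induction l; simpl; [ring |]. rewrite IHl. ring. Qed.

Lemma expect_prod n p t phi :
  expect n p t (prod_over phi) = (rsum n (fun i => p i * phi i)) ^ t.
Proof.
  induction t; [unfold expect; simpl; ring |].
  change (expect n p (S t) (prod_over phi))
    with (lsum (idx_seqs n (S t)) (fun l => weight p l * prod_over phi l)).
  simpl idx_seqs. rewrite lsum_flat_map.
  rewrite (lsum_ext _ _ (fun l => rsum n (fun i => p i * phi i) * (weight p l * prod_over phi l))).
  - rewrite lsum_scal.
    change (lsum (idx_seqs n t) (fun l => weight p l * prod_over phi l)) with (expect n p t (prod_over phi)).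
    rewrite IHt. simpl. ring.
  - intros l _. rewrite lsum_map.
    change (lsum (seq 0 n) ?F) with (sum_lt n F). rewrite sum_lt_rsum, Rmult_comm, <- rsum_scal.
    apply rsum_ext; intros.
    rewrite weight_app, prod_over_app. ring.
Qed.

Lemma expect_one n p t : rsum n p = 1 -> expect n p t (fun _ => 1) = 1.
Proof.
  intros Hp.
  replace (fun _ : list nat => 1) with (prod_over (fun _ => 1))
    by (apply functional_extensionality; intro; apply prod_over_one).
  rewrite expect_prod, (rsum_ext n _ p) by (intros; ring). rewrite Hp. apply pow1.
Qed.

Lemma idx_seqs_in n t l : In l (idx_seqs n t) -> Forall (fun i => (i < n)%nat) l.
Proof.
  revert l. induction t; intros l H; simpl in H.
  - destruct H as [<- | []]. constructor.
  - apply in_flat_map in H. destruct H as [l0 [H1 H2]].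
    apply in_map_iff in H2. destruct H2 as [j [<- H3]]. apply in_seq in H3.
    apply Forall_app. split; auto. constructor; [lia | constructor].
Qed.

Lemma weight_nonneg (p : nat -> R) n l :
  (forall j, (j < n)%nat -> 0 <= p j) -> Forall (fun i => (i < n)%nat) l -> 0 <= weight p l.
Proof. intros Hp H. induction H; simpl; [lra |]. apply Rmult_le_pos; auto. Qed.

Lemma expect_le n p t F G :
  (forall j, (j < n)%nat -> 0 <= p j) ->
  (forall l, In l (idx_seqs n t) -> F l <= G l) -> expect n p t F <= expect n p t G.
Proof.
  intros Hp H. apply lsum_le. intros l Hl. apply Rmult_le_compat_l; auto.
  eapply weight_nonneg; eauto. eapply idx_seqs_in; eauto.
Qed.

Lemma expect_lin n p t a F b G :
  expect n p t (fun l => a * F l + b * G l) = a * expect n p t F + b * expect n p t G.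
Proof.
  unfold expect. fold (lsum (idx_seqs n t) (fun l => weight p l * (a * F l + b * G l))).
  fold (lsum (idx_seqs n t) (fun l => weight p l * F l)) (lsum (idx_seqs n t) (fun l => weight p l * G l)).
  rewrite <- !lsum_scal, <- lsum_plus. apply lsum_ext; intros; ring.
Qed.

Lemma even_S m : Nat.even (S m) = negb (Nat.even m).
Proof. rewrite Nat.even_succ, <- Nat.negb_even. auto. Qed.

Lemma pow_le_one r n : 0 <= r <= 1 -> r ^ n <= 1.
Proof. intros H. induction n; simpl; [lra |]. assert (0 <= r ^ n) by (apply pow_le; lra). nra. Qed.

Lemma geom_tail r K D :
  0 <= r <= 1 ->
  r ^ K - r ^ D <= rsum D (fun m => if Nat.leb K m then r ^ m else 0) * (1 - r).
Proof.
  intros Hr. induction D; simpl.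
  - assert (r ^ K <= 1) by (apply pow_le_one; lra). lra.
  - destruct (Nat.leb_spec K D); [lra |].
    assert (0 <= rsum D (fun m => if Nat.leb K m then r ^ m else 0)).
    { apply rsum_nonneg. intros m _. destruct (Nat.leb K m); [apply pow_le; lra | lra]. }
    assert (r ^ K <= r * r ^ D).
    { replace K with (S D + (K - S D))%nat by lia. rewrite pow_add. simpl.
      assert (r ^ (K - S D) <= 1) by (apply pow_le_one; lra).
      assert (0 <= r * r ^ D) by (apply Rmult_le_pos; [lra | apply pow_le; lra]). nra. }
    nra.
Qed.

(** For a PIFO algorithm A, an index j, an even dimension
    d = 2k and parameters s in (0,1], a = mu (1-s)/s^2, the component j is the
    chain with the even links (weight a n), the other components the chain
    with the odd links (weight a n/(n-1)); the last coordinate carries an extra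
    diagonal weight so that the average chain [chain_avg] has the geometric
    minimiser y*_m = gamma0 (1-s)^m exactly. *)
Definition lin_first (beta : R) (m : nat) : R := if Nat.eqb m 0 then beta else 0.

Lemma lin_first_vanish beta K : (1 <= K)%nat -> vanish_from K (lin_first beta).
Proof. intros HK m Hm. unfold lin_first. destruct (Nat.eqb_spec m 0); [lia | auto]. Qed.

Lemma ltb_last d m : (pred d <= m)%nat -> Nat.ltb (S m) d = false.
Proof. intros H. apply Nat.ltb_ge. lia. Qed.

Section HardChains.
Variables (n d k : nat) (mu a s beta : R).
Hypothesis Hn : (2 <= n)%nat.
Hypothesis Hdk : d = (2 * k)%nat.
Hypothesis Hk : (1 <= k)%nat.
Hypothesis Hmu : 0 < mu.
Hypothesis Ha : 0 < a.
Hypothesis Hs : 0 < s <= 1.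

Local Notation N := (INR n).

Lemma INR_ge2 : 2 <= N.
Proof. replace 2 with (INR 2) by (simpl; ring). apply le_INR. auto. Qed.


Definition chain_special : chain :=
  mkChain (fun _ => mu)
    (fun m => if Nat.even m then (if Nat.ltb (S m) d then a * N else 0) else 0)
    (lin_first beta).

Definition chain_other : chain :=
  mkChain (fun m => mu + (if Nat.eqb m (pred d) then a * s * N / (N - 1) else 0))
    (fun m => if Nat.even m then 0 else (if Nat.ltb (S m) d then a * N / (N - 1) else 0))
    (lin_first beta).

Definition chain_avg : chain :=
  mkChain (fun m => mu + (if Nat.eqb m (pred d) then a * s else 0))
    (fun m => if Nat.ltb (S m) d then a else 0)
    (lin_first beta).

Ltac unfold_chains := unfold chain_special, chain_other, chain_avg; cbn [diag link lin].

Lemma aN_pos : 0 < a * N.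
Proof. pose proof INR_ge2. apply Rmult_lt_0_compat; lra. Qed.

Lemma aN1_pos : 0 < a * N / (N - 1).
Proof. pose proof INR_ge2. apply Rdiv_lt_0_compat; [apply aN_pos | lra]. Qed.

Lemma asN1_bounds : 0 <= a * s * N / (N - 1) <= a * N / (N - 1).
Proof.
  pose proof INR_ge2. pose proof aN1_pos.
  replace (a * s * N / (N - 1)) with (s * (a * N / (N - 1))) by (field; lra). nra.
Qed.

Lemma special_links_below : links_below d (link chain_special).
Proof. intros m Hm. simpl. rewrite ltb_last by auto. destruct (Nat.even m); auto. Qed.

Lemma special_link_nonneg m : 0 <= link chain_special m.
Proof. pose proof aN_pos. simpl. destruct (Nat.even m); [destruct (Nat.ltb (S m) d) |]; lra. Qed.

Lemma special_no_adjacent m : link chain_special m = 0 \/ link chain_special (S m) = 0.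
Proof. unfold_chains. rewrite even_S. destruct (Nat.even m); simpl; auto. Qed.

Lemma other_links_below : links_below d (link chain_other).
Proof. intros m Hm. simpl. rewrite ltb_last by auto. destruct (Nat.even m); auto. Qed.

Lemma other_diag m : mu <= diag chain_other m.
Proof. pose proof asN1_bounds. simpl. destruct (Nat.eqb m (pred d)); lra. Qed.

Lemma other_link_nonneg m : 0 <= link chain_other m.
Proof. pose proof aN1_pos. simpl. destruct (Nat.even m); [| destruct (Nat.ltb (S m) d)]; lra. Qed.

Lemma other_no_adjacent m : link chain_other m = 0 \/ link chain_other (S m) = 0.
Proof. unfold_chains. rewrite even_S. destruct (Nat.even m); simpl; auto. Qed.

Lemma other_prev_link_odd k' : prev_link (link chain_other) (S (2 * k')) = 0.
Proof. unfold_chains. cbn [prev_link]. rewrite Nat.even_mul. simpl. auto. Qed.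

(* Row sums of the excess Hessians, which control the smoothness constants. *)
Lemma special_row m :
  (m < d)%nat ->
  (diag chain_special m - mu) + link chain_special m + prev_link (link chain_special) m <= a * N.
Proof.
  intros Hm. pose proof aN_pos. unfold_chains. destruct m as [| m']; cbn [prev_link].
  - simpl. destruct (Nat.ltb 1 d); lra.
  - rewrite even_S. destruct (Nat.even m'); simpl;
      destruct (Nat.ltb (S (S m')) d); destruct (Nat.ltb (S m') d); lra.
Qed.

Lemma other_row m :
  (m < d)%nat ->
  (diag chain_other m - mu) + link chain_other m + prev_link (link chain_other) m <= a * N / (N - 1).
Proof.
  intros Hm. pose proof aN1_pos. pose proof asN1_bounds. unfold_chains.
  destruct (Nat.eqb_spec m (pred d)) as [e | e].
  - (* the last coordinate is odd, so only the diagonal excess appears *)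
    rewrite (ltb_last d m) by lia. subst m. rewrite Hdk.
    destruct k as [| k']; [lia |]. replace (pred (2 * S k')) with (S (2 * k')) by lia.
    cbn [prev_link].
    assert (Hev : Nat.even (2 * k') = true) by (rewrite Nat.even_mul; reflexivity).
    rewrite Hev. destruct (Nat.even (S (2 * k'))); lra.
  - destruct m as [| m']; cbn [prev_link].
    + simpl. destruct (Nat.ltb 1 d); lra.
    + rewrite even_S. destruct (Nat.even m'); simpl;
        destruct (Nat.ltb (S (S m')) d); destruct (Nat.ltb (S m') d); lra.
Qed.

Lemma cval_average y :
  / N * (cval d chain_special y + (N - 1) * cval d chain_other y) = cval d chain_avg y.
Proof.
  pose proof INR_ge2.
  unfold cval. rewrite <- rsum_scal, <- rsum_plus, <- rsum_scal. apply rsum_ext. intros m _. simpl.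
  destruct (Nat.even m); destruct (Nat.ltb (S m) d); destruct (Nat.eqb m (pred d)); field; lra.
Qed.

Lemma avg_diag m : mu <= diag chain_avg m.
Proof. simpl. destruct (Nat.eqb m (pred d)); [| lra]. assert (0 <= a * s) by (apply Rmult_le_pos; lra). lra. Qed.

Lemma avg_link_nonneg m : 0 <= link chain_avg m.
Proof. simpl. destruct (Nat.ltb (S m) d); lra. Qed.

Lemma avg_links_below : links_below d (link chain_avg).
Proof. intros m Hm. simpl. rewrite ltb_last by auto. auto. Qed.

(** The minimiser of [chain_avg]: when beta = gamma (mu + a s) and
    a s^2 = mu (1-s), the geometric sequence gamma (1-s)^m is stationary. *)
Variable gamma : R.
Hypothesis Has : a * s ^ 2 = mu * (1 - s).
Hypothesis Hbeta : beta = gamma * (mu + a * s).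

Definition ystar (m : nat) : R := gamma * (1 - s) ^ m.

Lemma ystar_grad m : (m < d)%nat -> cgrad chain_avg ystar m = 0.
Proof.
  intros Hm. unfold cgrad, ystar. simpl. unfold lin_first.
  destruct m as [| m'].
  - rewrite (proj2 (Nat.eqb_neq 0 (pred d))) by lia.
    rewrite (proj2 (Nat.ltb_lt 1 d)) by lia. simpl. rewrite Hbeta. ring.
  - cbn [prev_link pred]. rewrite (proj2 (Nat.ltb_lt (S m') d)) by lia.
    destruct (Nat.eqb_spec (S m') 0); [lia |]. rewrite <- !tech_pow_Rmult.
    destruct (Nat.eqb_spec (S m') (pred d)) as [e | e].
    + rewrite (ltb_last d (S m')) by lia.
      transitivity (gamma * (1 - s) ^ m' * (mu * (1 - s) - a * s ^ 2)); [ring |].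
      rewrite Has. ring.
    + rewrite (proj2 (Nat.ltb_lt (S (S m')) d)) by lia.
      transitivity (gamma * (1 - s) ^ m' * (mu * (1 - s) - a * s ^ 2)); [ring |].
      rewrite Has. ring.
Qed.

Lemma cval_avg_split y :
  cval d chain_avg y = cval d chain_avg ystar + cform d chain_avg (fun m => y m - ystar m).
Proof.
  replace y with (fun m => ystar m + (y m - ystar m)) at 1
    by (apply functional_extensionality; intro; ring).
  rewrite cval_expand by (apply avg_links_below).
  rewrite (rsum_ext d _ (fun _ => 0)) by (intros m Hm; rewrite ystar_grad by auto; ring).
  rewrite rsum_zero. ring.
Qed.

Lemma cval_avg_gap : cval d chain_avg (fun _ => 0) - cval d chain_avg ystar = beta * gamma / 2.
Proof.
  pose proof (cval_avg_split (fun _ => 0)) as E1.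
  pose proof (cval_expand d chain_avg (fun _ => 0) ystar avg_links_below) as E2.
  cbv beta in E1, E2.
  replace (fun m => 0 + ystar m) with ystar in E2 by (apply functional_extensionality; intro; ring).
  assert (E4 : rsum d (fun m => cgrad chain_avg (fun _ => 0) m * ystar m) = - (beta * gamma)).
  { rewrite (rsum_ext d _ (fun m => (if Nat.eqb m 0 then 1 else 0) * (- beta * ystar m))).
    - rewrite rsum_indicator0 by lia. unfold ystar. simpl. ring.
    - intros m _. unfold cgrad. simpl. unfold lin_first. destruct (Nat.eqb m 0); destruct m; simpl; ring. }
  assert (E5 : cform d chain_avg (fun m => 0 - ystar m) = cform d chain_avg ystar).
  { unfold cform. apply rsum_ext; intros; ring. }
  rewrite E5 in E1. lra.
Qed.

Lemma tail_distance y K :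
  vanish_from K y ->
  gamma ^ 2 * ((((1 - s) ^ 2) ^ K - ((1 - s) ^ 2) ^ d) / (1 - (1 - s) ^ 2))
  <= rsum d (fun m => (y m - ystar m) ^ 2).
Proof.
  intros Hy. set (r := (1 - s) ^ 2).
  assert (Hr : 0 <= r <= 1) by (unfold r; split; [apply pow2_ge_0 | nra]).
  assert (Hr1 : r < 1) by (unfold r; nra).
  apply Rle_trans with (gamma ^ 2 * rsum d (fun m => if Nat.leb K m then r ^ m else 0)).
  - apply Rmult_le_compat_l; [apply pow2_ge_0 |].
    apply Rmult_le_reg_r with (1 - r); [lra |].
    replace ((r ^ K - r ^ d) / (1 - r) * (1 - r)) with (r ^ K - r ^ d) by (field; lra).
    apply geom_tail; auto.
  - rewrite <- rsum_scal. apply rsum_le. intros m _. destruct (Nat.leb_spec K m).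
    + rewrite (Hy m) by auto. unfold ystar, r.
      rewrite <- pow_mult, Nat.mul_comm, pow_mult. apply Req_le. ring.
    + rewrite Rmult_0_r. apply pow2_ge_0.
Qed.
End HardChains.

Section HardInstance.
Variables (n : nat) (A : PIFO n) (j d k : nat) (mu a s Delta : R).
Hypothesis Hn : (2 <= n)%nat.
Hypothesis Hj : (j < n)%nat.
Hypothesis Hdk : d = (2 * k)%nat.
Hypothesis Hk : (1 <= k)%nat.
Hypothesis Hmu : 0 < mu.
Hypothesis Ha : 0 < a.
Hypothesis Hs : 0 < s <= 1.
Hypothesis Has : a * s ^ 2 = mu * (1 - s).
Hypothesis HD : 0 < Delta.

Local Notation N := (INR n).
Local Notation x0 := (init A d).

(* The scale gamma0 of y* is tuned so that f(x0) - f* = Delta. *)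
Definition gamma0 : R := sqrt (2 * Delta / (mu + a * s)).
Definition beta0 : R := gamma0 * (mu + a * s).

Local Notation special := (chain_special n d mu a beta0).
Local Notation other := (chain_other n d mu a s beta0).
Local Notation avg_chain := (chain_avg d mu a s beta0).
Local Notation ys := (ystar s gamma0).

Definition spec (i : nat) : chain := if Nat.eqb i j then special else other.
Definition comp_fun (i : nat) : vec d -> R := qfun x0 (spec i).
Definition comp_grad (i : nat) : vec d -> vec d := qgrad x0 (spec i).
Definition comp_prox (i : nat) (g : R) : vec d -> vec d := qprox x0 (spec i) g.
Definition xstar : vec d := vadd x0 (refl x0 (vec_of d ys)).

Lemma d_pos : (0 < d)%nat.
Proof. lia. Qed.

Lemma mu_as_pos : 0 < mu + a * s.
Proof. assert (0 < a * s) by (apply Rmult_lt_0_compat; lra). lra. Qed.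

Lemma gamma0_sq : gamma0 ^ 2 = 2 * Delta / (mu + a * s).
Proof. pose proof mu_as_pos. unfold gamma0. apply pow2_sqrt. apply Rlt_le, Rdiv_lt_0_compat; lra. Qed.

Lemma spec_links_below i : links_below d (link (spec i)).
Proof. unfold spec. destruct (Nat.eqb i j); [apply special_links_below | apply other_links_below]. Qed.

Lemma spec_diag i m : mu <= diag (spec i) m.
Proof. unfold spec. destruct (Nat.eqb i j); [simpl; lra | apply other_diag; auto]. Qed.

Lemma spec_diag_nonneg i m : 0 <= diag (spec i) m.
Proof. pose proof (spec_diag i m). lra. Qed.

Lemma spec_link_nonneg i m : 0 <= link (spec i) m.
Proof. unfold spec. destruct (Nat.eqb i j); [apply special_link_nonneg | apply other_link_nonneg]; auto. Qed.

Lemma spec_no_adjacent i m : link (spec i) m = 0 \/ link (spec i) (S m) = 0.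
Proof. unfold spec. destruct (Nat.eqb i j); [apply special_no_adjacent | apply other_no_adjacent]. Qed.

Lemma comp_gradient i : has_gradient (comp_fun i) (comp_grad i).
Proof. apply qfun_gradient; [apply spec_links_below | apply spec_diag_nonneg | apply spec_link_nonneg]. Qed.

Lemma comp_prox_unique i t x :
  is_prox_unique (comp_fun i) (gam A d t) x (comp_prox i (gam A d t) x).
Proof.
  apply qprox_spec;
    [apply spec_links_below | apply spec_diag_nonneg | apply spec_link_nonneg
    | apply spec_no_adjacent | apply gam_pos].
Qed.

Lemma comp_grad_lipschitz i x y :
  sqnorm (vsub (comp_grad i x) (comp_grad i y))
  <= (if Nat.eqb i j then (mu + 2 * (a * N)) ^ 2 else (mu + 2 * (a * N / (N - 1))) ^ 2)
     * sqnorm (vsub x y).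
Proof.
  pose proof (aN_pos n a Hn Ha). pose proof (aN1_pos n a Hn Ha).
  unfold comp_grad. pose proof (spec_links_below i). pose proof (spec_link_nonneg i).
  pose proof (spec_diag i). unfold spec in *. destruct (Nat.eqb i j).
  - apply qgrad_lipschitz; auto; try lra. apply special_row; auto.
  - apply qgrad_lipschitz; auto; try lra. eapply other_row; eauto.
Qed.

Lemma comp_average_smooth L :
  mu ^ 2 + 8 * mu * a + 4 * a ^ 2 * N ^ 2 / (N - 1) <= L ^ 2 -> average_smooth n comp_grad L.
Proof.
  intros HL x y. pose proof (INR_ge2 n Hn). rewrite sum_lt_rsum.
  set (S0 := sqnorm (vsub x y)). pose proof (sqnorm_nonneg (vsub x y)).
  apply Rle_trans with (/ N * rsum n (fun i => if Nat.eqb i j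
                          then (mu + 2 * (a * N)) ^ 2 * S0 else (mu + 2 * (a * N / (N - 1))) ^ 2 * S0)).
  { apply Rmult_le_compat_l; [apply Rlt_le, Rinv_0_lt_compat; lra |].
    apply rsum_le. intros i _. pose proof (comp_grad_lipschitz i x y). destruct (Nat.eqb i j); auto. }
  rewrite rsum_if by auto.
  replace (/ N * ((mu + 2 * (a * N)) ^ 2 * S0 + (N - 1) * ((mu + 2 * (a * N / (N - 1))) ^ 2 * S0)))
    with ((mu ^ 2 + 8 * mu * a + 4 * a ^ 2 * N ^ 2 / (N - 1)) * S0) by (field; lra).
  apply Rmult_le_compat_r; auto.
Qed.

Lemma avg_comp_fun : avg_fun n comp_fun = qfun x0 avg_chain.
Proof.
  apply functional_extensionality; intro x. unfold avg_fun. rewrite sum_lt_rsum.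
  rewrite (rsum_ext n _ (fun i => if Nat.eqb i j then qfun x0 special x else qfun x0 other x))
    by (intros i _; unfold comp_fun, spec; destruct (Nat.eqb i j); auto).
  rewrite rsum_if by auto. unfold qfun. apply cval_average; auto.
Qed.

Lemma avg_strongly_convex : strongly_convex (qfun x0 avg_chain) mu.
Proof.
  exists (qgrad x0 avg_chain). split.
  - apply qfun_gradient; [apply avg_links_below; auto | | apply avg_link_nonneg; auto].
    intros m. pose proof (avg_diag d mu a s beta0 Ha Hs m). lra.
  - intros x y. apply qfun_strongly_convex;
      [apply avg_links_below; auto | intros; apply avg_diag; auto | apply avg_link_nonneg; auto].
Qed.

Lemma qfun_avg_split x :
  qfun x0 avg_chain x = qfun x0 avg_chain xstar + cform d avg_chain (fun m => ycoord x0 x m - ys m).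
Proof.
  unfold qfun. rewrite (cval_restrict d avg_chain (ycoord x0 xstar) ys (avg_links_below d mu a s beta0)
                          (ycoord_of x0 ys)).
  apply (cval_avg_split n d k); auto.
Qed.

Lemma xstar_minimizer : is_minimizer (qfun x0 avg_chain) xstar.
Proof.
  intros x. rewrite (qfun_avg_split x).
  assert (0 <= cform d avg_chain (fun m => ycoord x0 x m - ys m)).
  { apply cform_nonneg; [| apply avg_link_nonneg; auto].
    intros m. pose proof (avg_diag d mu a s beta0 Ha Hs m). lra. }
  lra.
Qed.

Lemma initial_gap : qfun x0 avg_chain x0 - qfun x0 avg_chain xstar = Delta.
Proof.
  unfold qfun at 2. rewrite (cval_restrict d avg_chain (ycoord x0 xstar) ys (avg_links_below d mu a s beta0)
                               (ycoord_of x0 ys)).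
  assert (E0 : ycoord x0 x0 = fun _ => 0).
  { apply functional_extensionality; intro m. unfold ycoord.
    replace (vsub x0 x0) with (@vzero d) by (apply functional_extensionality; intro; unfold vsub, vzero; ring).
    rewrite refl_zero, coord_vzero. auto. }
  unfold qfun. rewrite E0, (cval_avg_gap n d k mu a s beta0 Hn Hdk Hk gamma0 Has eq_refl).
  pose proof mu_as_pos. unfold beta0.
  replace (gamma0 * (mu + a * s) * gamma0 / 2) with (gamma0 ^ 2 * (mu + a * s) / 2) by field.
  rewrite gamma0_sq. field. lra.
Qed.

(* A query of the special component advances the support by one pair of
   coordinates; the other components keep odd supports odd. *)
Definition advance (i : nat) : nat := if Nat.eqb i j then 2%nat else 0%nat.

Lemma iterate_span l :
  span_lt x0 (1 + total_adv advance l) (iterate A d comp_fun comp_grad comp_prox l).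
Proof.
  pose proof d_pos as Hd.
  apply (iterate_Sp A d comp_fun comp_grad comp_prox (span_lt x0)
           (fun K => exists k', K = S (2 * k')) advance).
  - intros; apply span_lt_add; auto.
  - intros; apply span_lt_scale; auto.
  - intros; apply span_lt_zero.
  - intros; eapply span_lt_mono; eauto.
  - intros K [k' ->]. apply span_lt_x0; auto. lia.
  - intros K i [k' ->]. unfold advance. destruct (Nat.eqb i j); [exists (S k') | exists k']; lia.
  - intros K i x [k' ->] HS. unfold advance, comp_grad, spec. destruct (Nat.eqb i j).
    + apply (span_lt_mono x0 (S (S (2 * k')))); [lia |].
      apply qgrad_span; auto; [lia | apply lin_first_vanish; lia].
    + rewrite Nat.add_0_r. apply qgrad_span_tight; auto;
        [lia | apply lin_first_vanish; lia | apply other_prev_link_odd].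
  - intros K i g x [k' ->] HS. unfold advance, comp_prox, spec. destruct (Nat.eqb i j).
    + apply (span_lt_mono x0 (S (S (2 * k')))); [lia |].
      apply qprox_span; auto; [lia | apply lin_first_vanish; lia].
    + rewrite Nat.add_0_r. apply qprox_span_tight; auto;
        [lia | apply lin_first_vanish; lia | apply other_prev_link_odd].
  - exists 0%nat. lia.
Qed.

(* Each query of the special component multiplies the attainable tail by q^4. *)
Definition drop_factor (i : nat) : R := if Nat.eqb i j then (1 - s) ^ 4 else 1.

Lemma pow_total_adv l :
  ((1 - s) ^ 2) ^ (1 + total_adv advance l) = (1 - s) ^ 2 * prod_over drop_factor l.
Proof.
  simpl. f_equal. induction l as [| i l IH]; simpl; [ring |].
  rewrite pow_add, IH. unfold advance, drop_factor. destruct (Nat.eqb i j); simpl; ring.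
Qed.

Lemma rate_identity : mu / 2 * gamma0 ^ 2 / (1 - (1 - s) ^ 2) = Delta / (1 + (1 - s)).
Proof.
  pose proof mu_as_pos.
  assert (Hmas : (mu + a * s) * s = mu).
  { transitivity (mu * s + a * s ^ 2); [ring |]. rewrite Has. ring. }
  rewrite gamma0_sq. replace (mu / 2) with ((mu + a * s) * s / 2) by (rewrite Hmas; reflexivity).
  field. repeat split; nra.
Qed.

Lemma path_gap l :
  Delta / (1 + (1 - s)) * ((1 - s) ^ 2 * prod_over drop_factor l - ((1 - s) ^ 2) ^ d)
  <= qfun x0 avg_chain (iterate A d comp_fun comp_grad comp_prox l) - qfun x0 avg_chain xstar.
Proof.
  set (z := iterate A d comp_fun comp_grad comp_prox l).
  set (K := (1 + total_adv advance l)%nat). set (r := (1 - s) ^ 2).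
  assert (Hy : vanish_from K (ycoord x0 z))
    by (apply ycoord_vanish; [apply d_pos | unfold K; lia | apply iterate_span]).
  pose proof (tail_distance d s Hs gamma0 _ K Hy) as T. fold r in T.
  pose proof (cform_lower d avg_chain (fun m => ycoord x0 z m - ys m) mu
                (fun m _ => avg_diag d mu a s beta0 Ha Hs m) (avg_link_nonneg d mu a s beta0 Ha)) as C.
  rewrite (qfun_avg_split z), <- rate_identity. fold r. unfold r at 2. rewrite <- pow_total_adv. fold K r.
  assert (Hr : r < 1) by (unfold r; nra).
  replace (mu / 2 * gamma0 ^ 2 / (1 - r) * (r ^ K - r ^ d))
    with (mu / 2 * (gamma0 ^ 2 * ((r ^ K - r ^ d) / (1 - r)))) by (field; lra).
  apply Rle_trans with (mu / 2 * rsum d (fun m => (ycoord x0 z m - ys m) ^ 2)); [| lra].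
  apply Rmult_le_compat_l; [lra | exact T].
Qed.

(* Averaging over i.i.d. indices: E prod drop_factor = (1 - p_j (1 - q^4))^t. *)
Lemma expected_gap t :
  Delta / (1 + (1 - s)) * ((1 - s) ^ 2 * (1 - prob A j * (1 - (1 - s) ^ 4)) ^ t - ((1 - s) ^ 2) ^ d)
  <= expect n (prob A) t (fun l => qfun x0 avg_chain (iterate A d comp_fun comp_grad comp_prox l))
     - qfun x0 avg_chain xstar.
Proof.
  set (LB := Delta / (1 + (1 - s))). set (fstar := qfun x0 avg_chain xstar).
  assert (Hp1 : rsum n (prob A) = 1) by (rewrite <- sum_lt_rsum; apply prob_sum).
  assert (HB : rsum n (fun i => prob A i * drop_factor i) = 1 - prob A j * (1 - (1 - s) ^ 4)).
  { unfold drop_factor. rewrite rsum_weighted_if, Hp1 by auto. ring. }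
  assert (HE : expect n (prob A) t (fun l => (LB * (1 - s) ^ 2) * prod_over drop_factor l
                                             + (fstar - LB * ((1 - s) ^ 2) ^ d) * 1)
               <= expect n (prob A) t (fun l => qfun x0 avg_chain (iterate A d comp_fun comp_grad comp_prox l))).
  { apply expect_le; [apply prob_nonneg |]. intros l _. pose proof (path_gap l). fold LB fstar in H. lra. }
  rewrite expect_lin, expect_prod, expect_one, HB in HE by auto. lra.
Qed.

Lemma hard_instance :
  exists (fs : nat -> vec d -> R) (gs : nat -> vec d -> vec d) (px : nat -> R -> vec d -> vec d),
    (forall i, has_gradient (fs i) (gs i)) /\
    (forall i t x, is_prox_unique (fs i) (gam A d t) x (px i (gam A d t) x)) /\
    (forall L, mu ^ 2 + 8 * mu * a + 4 * a ^ 2 * N ^ 2 / (N - 1) <= L ^ 2 -> average_smooth n gs L) /\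
    strongly_convex (avg_fun n fs) mu /\
    exists xs : vec d,
      is_minimizer (avg_fun n fs) xs /\
      avg_fun n fs x0 - avg_fun n fs xs = Delta /\
      forall t : nat,
        Delta / (1 + (1 - s)) * ((1 - s) ^ 2 * (1 - prob A j * (1 - (1 - s) ^ 4)) ^ t - ((1 - s) ^ 2) ^ d)
        <= expect n (prob A) t (fun l => avg_fun n fs (iterate A d fs gs px l)) - avg_fun n fs xs.
Proof.
  exists comp_fun, comp_grad, comp_prox. rewrite avg_comp_fun.
  split; [apply comp_gradient |]. split; [intros; apply comp_prox_unique |].
  split; [apply comp_average_smooth |]. split; [apply avg_strongly_convex |].
  exists xstar. split; [apply xstar_minimizer |]. split; [apply initial_gap | apply expected_gap].
Qed.
End HardInstance.

(** With u = eps/Delta and lambda = ln(1/u), the bound of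
    [expected_gap] exceeds eps as soon as (1-x)^t >= u^{1/10} (few queries of
    the special component) and ((1-s)^2)^d <= u^2 (long enough chain). *)
Lemma exp_pow x t : exp x ^ t = exp (x * INR t).
Proof.
  induction t; [simpl; rewrite Rmult_0_r, exp_0; auto |].
  rewrite S_INR, <- tech_pow_Rmult, IHt, <- exp_plus. f_equal. ring.
Qed.

Lemma exp_mono a b : a <= b -> exp a <= exp b.
Proof.
  intros H. destruct (Rle_lt_or_eq_dec a b H) as [h | h]; [apply Rlt_le, exp_increasing; auto |].
  rewrite h; lra.
Qed.

Lemma one_minus_exp x : 0 <= x <= 1/2 -> exp (-(2 * x)) <= 1 - x.
Proof.
  intros H. pose proof (exp_ineq1_le (2 * x)).
  assert (E : exp (-(2 * x)) * exp (2 * x) = 1)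
    by (rewrite <- exp_plus; replace (-(2 * x) + 2 * x) with 0 by ring; apply exp_0).
  assert (0 < exp (-(2 * x))) by apply exp_pos.
  assert ((1 - x) * (1 + 2 * x) >= 1) by nra. nra.
Qed.

Lemma pow_lt_mono a b n : 0 <= a < b -> a ^ S n < b ^ S n.
Proof.
  intros H. induction n; [simpl; lra |].
  rewrite <- (tech_pow_Rmult a), <- (tech_pow_Rmult b).
  assert (0 <= a ^ S n) by (apply pow_le; lra). nra.
Qed.

Lemma sq_le_inv a b : 0 <= a -> 0 <= b -> a ^ 2 <= b ^ 2 -> a <= b.
Proof. intros. nra. Qed.

Lemma survival_factor x t lam :
  0 <= x <= 1/2 -> INR t * (2 * x) <= lam / 10 -> exp (- lam / 10) <= (1 - x) ^ t.
Proof.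
  intros Hx Ht. apply Rle_trans with (exp (-(2 * x)) ^ t).
  - rewrite exp_pow. apply exp_mono. lra.
  - apply pow_incr. split; [apply Rlt_le, exp_pos | apply one_minus_exp; auto].
Qed.

Lemma chain_end_factor s d lam :
  0 < s <= 1 -> 0 <= lam -> lam <= INR d * s -> ((1 - s) ^ 2) ^ d <= exp (- lam) ^ 2.
Proof.
  intros Hs Hl Hd. assert (Hq : 0 <= 1 - s <= exp (- s)) by (pose proof (exp_ineq1_le (- s)); lra).
  apply Rle_trans with ((exp (- s) ^ 2) ^ d).
  - apply pow_incr. split; [apply pow2_ge_0 | apply pow_incr; lra].
  - rewrite !exp_pow. apply exp_mono. simpl. nra.
Qed.

(* The scalar inequality behind the threshold eps/Delta <= 0.00327. *)
Lemma threshold_inequality u v q :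
  0 < u <= 1/300 -> 0 < v -> v ^ 10 = u -> 1/10 <= q <= 1 -> (1 + q) * u <= q ^ 2 * v - u ^ 2.
Proof.
  intros Hu Hv Hv10 Hq.
  assert (H9 : v ^ 9 <= 1/120).
  { apply Rnot_lt_le. intros C.
    assert (C2 : (1/120) ^ 10 < (v ^ 9) ^ 10) by (apply (pow_lt_mono (1/120) (v ^ 9) 9); lra).
    assert (C3 : (v ^ 9) ^ 10 = u ^ 9) by (rewrite <- pow_mult, <- Hv10, <- pow_mult; auto).
    assert (C4 : u ^ 9 <= (1/300) ^ 9) by (apply pow_incr; lra).
    assert (C5 : (1/300) ^ 9 <= (1/120) ^ 10) by (simpl; lra).
    lra. }
  assert (Huv : u = v * v ^ 9) by (rewrite <- Hv10; simpl; ring).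
  assert (u ^ 2 <= u / 300) by (simpl; nra).
  assert (u <= v / 120) by (rewrite Huv; nra).
  assert ((1 + q) * u <= (1 + q) * (v / 120)) by (apply Rmult_le_compat_l; lra).
  assert (Qq : (1 + q) / 120 + 1/36000 <= q ^ 2) by (simpl; nra).
  assert (((1 + q) / 120 + 1/36000) * v <= q ^ 2 * v) by (apply Rmult_le_compat_r; lra).
  lra.
Qed.

Lemma final_numerics Delta eps s x t d :
  0 < Delta -> 0 < eps -> eps / Delta <= 327 / 100000 ->
  0 < s <= 9/10 -> 0 <= x <= 1/2 ->
  INR t * (2 * x) <= ln (Delta / eps) / 10 -> ln (Delta / eps) <= INR d * s ->
  eps <= Delta / (1 + (1 - s)) * ((1 - s) ^ 2 * (1 - x) ^ t - ((1 - s) ^ 2) ^ d).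
Proof.
  intros HD He Hu Hs Hx Ht Hd.
  set (lam := ln (Delta / eps)) in *. set (q := 1 - s). set (u := eps / Delta) in Hu |- *.
  assert (Hu0 : 0 < u) by (unfold u; apply Rdiv_lt_0_compat; auto).
  assert (Heu : exp (- lam) = u).
  { unfold lam, u. rewrite <- ln_Rinv by (apply Rdiv_lt_0_compat; auto).
    rewrite exp_ln by (apply Rinv_0_lt_compat, Rdiv_lt_0_compat; auto). apply Rinv_div. }
  assert (Hlam : 0 <= lam).
  { destruct (Rle_or_lt 0 lam) as [h | h]; auto. exfalso.
    assert (exp 0 < exp (- lam)) by (apply exp_increasing; lra).
    rewrite exp_0, Heu in H. lra. }
  set (v := exp (- lam / 10)).
  assert (Hv10 : v ^ 10 = u) by (unfold v; rewrite exp_pow, <- Heu; f_equal; simpl; field).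
  pose proof (survival_factor x t lam Hx Ht) as H1. fold v in H1.
  pose proof (chain_end_factor s d lam ltac:(lra) Hlam Hd) as H2. rewrite Heu in H2.
  pose proof (threshold_inequality u v q ltac:(lra) (exp_pos _) Hv10 ltac:(unfold q; lra)).
  assert (q ^ 2 * v <= q ^ 2 * (1 - x) ^ t) by (apply Rmult_le_compat_l; [apply pow2_ge_0 | auto]).
  fold q in H2. assert (Hkey : (1 + q) * u <= q ^ 2 * (1 - x) ^ t - (q ^ 2) ^ d) by lra.
  assert (E : eps = Delta * u) by (unfold u; field; lra).
  rewrite E. apply Rmult_le_reg_r with (1 + q); [unfold q; lra |].
  replace (Delta / (1 + q) * (q ^ 2 * (1 - x) ^ t - (q ^ 2) ^ d) * (1 + q))
    with (Delta * (q ^ 2 * (1 - x) ^ t - (q ^ 2) ^ d)) by (field; unfold q; lra).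
  rewrite Rmult_assoc. apply Rmult_le_compat_l; lra.
Qed.

(** Write X = n^{1/4} and Y = sqrt kappa.  The condition
    kappa >= sqrt(3/n) (n/2+1) gives the three inequalities below, which make
    the step s ~ X/Y and the link weight a = mu (1-s)/s^2 admissible. *)
Lemma kappa_consequences N L mu :
  2 <= N -> 0 < mu -> L / mu >= sqrt (3 / N) * (N / 2 + 1) ->
  6 * mu ^ 2 <= L ^ 2 /\ 17 / 5 * mu <= L * sqrt N /\ sqrt N <= 6 / 5 * (L / mu).
Proof.
  intros HN Hmu Hk.
  set (sg := sqrt (3 / N)) in *. set (nu := sqrt N). set (U := sg * (N / 2 + 1)) in *.
  assert (Hsg : 0 <= sg) by apply sqrt_pos.
  assert (Hnu : 0 < nu) by (apply sqrt_lt_R0; lra).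
  assert (S2 : sg ^ 2 = 3 / N) by (apply pow2_sqrt, Rlt_le, Rdiv_lt_0_compat; lra).
  assert (N2 : nu ^ 2 = N) by (apply pow2_sqrt; lra).
  assert (HU0 : 0 <= U) by (unfold U; apply Rmult_le_pos; lra).
  assert (HU2 : U ^ 2 * N = 3 * (N / 2 + 1) ^ 2).
  { unfold U. rewrite Rpow_mult_distr, S2. field. lra. }
  assert (HL : mu * U <= L).
  { apply Rmult_le_reg_r with (/ mu); [apply Rinv_0_lt_compat; lra |].
    rewrite Rmult_comm, <- Rmult_assoc, Rinv_l, Rmult_1_l by lra. fold (L / mu). lra. }
  assert (Hsn : 17 / 10 <= sg * nu).
  { apply sq_le_inv; [lra | apply Rmult_le_pos; lra |].
    rewrite Rpow_mult_distr, S2, N2. field_simplify; lra. }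
  split; [| split].
  - assert (6 <= U ^ 2) by (apply Rmult_le_reg_r with N; [lra | nra]).
    assert (mu ^ 2 * U ^ 2 <= L ^ 2)
      by (rewrite <- Rpow_mult_distr; apply pow_incr; split; [nra | auto]).
    nra.
  - assert (17 / 5 <= U * nu) by (unfold U; nra). nra.
  - apply Rle_trans with (6 / 5 * U); [| lra].
    apply sq_le_inv; [lra | lra |]. rewrite N2.
    apply Rmult_le_reg_r with N; [lra |]. nra.
Qed.

Lemma smoothness_budget N L mu a :
  2 <= N -> 0 < mu -> 0 <= a ->
  6 * mu ^ 2 <= L ^ 2 -> 17 / 5 * mu <= L * sqrt N -> 25 * a * sqrt N <= 4 * L ->
  mu ^ 2 + 8 * mu * a + 4 * a ^ 2 * N ^ 2 / (N - 1) <= L ^ 2.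
Proof.
  intros HN Hmu Ha H1 H2 H3.
  assert (Hnu : 0 < sqrt N) by (apply sqrt_lt_R0; lra).
  assert (N2 : sqrt N ^ 2 = N) by (apply pow2_sqrt; lra).
  assert (HL : 0 < L) by nra.
  assert (T2 : mu * a * 85 <= 4 * L ^ 2).
  { assert (25 * a * (17 / 5 * mu) <= 25 * a * (L * sqrt N)) by (apply Rmult_le_compat_l; lra). nra. }
  assert (T3 : 625 * a ^ 2 * N <= 16 * L ^ 2).
  { assert ((25 * a * sqrt N) ^ 2 <= (4 * L) ^ 2) by (apply pow_incr; split; [nra | auto]).
    rewrite !Rpow_mult_distr, N2 in H. lra. }
  assert (T4 : 4 * a ^ 2 * N ^ 2 / (N - 1) <= 8 * (a ^ 2 * N)).
  { apply Rmult_le_reg_r with (N - 1); [lra |].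
    replace (4 * a ^ 2 * N ^ 2 / (N - 1) * (N - 1)) with (4 * (a ^ 2 * N) * N) by (field; lra).
    assert (0 <= a ^ 2 * N) by (apply Rmult_le_pos; [apply pow2_ge_0 | lra]). nra. }
  pose proof (pow2_ge_0 L). lra.
Qed.

(* Step s = min(5X/(2Y), 9/10) and a = mu (1-s)/s^2. *)
Lemma step_choice X Y mu :
  0 < X -> 0 < Y -> 0 < mu -> X ^ 2 <= 6 / 5 * Y ^ 2 ->
  exists s a, 0 < s <= 9 / 10 /\ 0 < a /\ a * s ^ 2 = mu * (1 - s) /\
    25 * a * X ^ 2 <= 4 * mu * Y ^ 2 /\ s * Y <= 5 / 2 * X /\ / s <= 2 / 5 * (Y / X) + 10 / 9.
Proof.
  intros HX HY Hmu HXY.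
  assert (HR : 0 < Y / X) by (apply Rdiv_lt_0_compat; lra).
  destruct (Rle_lt_dec (5 / 2 * X / Y) (9 / 10)) as [Hc | Hc].
  - set (s := 5 / 2 * X / Y) in *.
    assert (Hs : 0 < s) by (unfold s; apply Rdiv_lt_0_compat; lra).
    set (a := mu * (1 - s) / s ^ 2).
    assert (Has : a * s ^ 2 = mu * (1 - s)) by (unfold a; field; lra).
    assert (Ha : 0 < a).
    { unfold a. apply Rdiv_lt_0_compat; [apply Rmult_lt_0_compat | apply pow_lt]; lra. }
    assert (HaX : 25 * a * X ^ 2 = 4 * (a * s ^ 2) * Y ^ 2) by (unfold s; field; lra).
    assert (HsY : s * Y = 5 / 2 * X) by (unfold s; field; lra).
    assert (Hinv : / s = 2 / 5 * (Y / X)) by (unfold s; field; lra).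
    assert (0 <= mu * s * Y ^ 2) by (apply Rmult_le_pos; [nra | apply pow2_ge_0]).
    exists s, a. rewrite Has in HaX. repeat split; lra.
  - set (a := mu * (1 - 9 / 10) / (9 / 10) ^ 2).
    assert (Ha : a = 10 / 81 * mu) by (unfold a; field).
    assert (HsY : 9 / 10 * Y <= 5 / 2 * X).
    { apply Rmult_le_reg_r with (/ Y); [apply Rinv_0_lt_compat; lra |].
      replace (9 / 10 * Y * / Y) with (9 / 10) by (field; lra). unfold Rdiv in Hc. lra. }
    exists (9 / 10), a. rewrite Ha. repeat split; try lra; nra.
Qed.

Lemma nat_ceil r : 0 <= r -> exists k : nat, r <= INR k <= r + 1.
Proof.
  intros Hr. destruct (archimed r) as [H1 H2]. exists (Z.to_nat (up r)).
  assert (0 <= up r)%Z by (apply le_IZR; lra).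
  rewrite INR_IZR_INZ, Z2Nat.id by auto. lra.
Qed.

Lemma chain_length lam s :
  0 < lam -> 0 < s ->
  exists k : nat, (1 <= k)%nat /\ lam <= INR (2 * k) * s /\ INR (2 * k) <= lam / s + 4.
Proof.
  intros Hl Hs. destruct (nat_ceil (lam / (2 * s))) as [k0 Hk0].
  { apply Rlt_le, Rdiv_lt_0_compat; lra. }
  exists (S k0). rewrite mult_INR, (S_INR k0). replace (INR 2) with 2 by (simpl; ring).
  assert (E : lam / (2 * s) * (2 * s) = lam) by (field; lra).
  assert (E2 : lam / s = 2 * (lam / (2 * s))) by (field; lra).
  repeat split; [lia | nra | lra].
Qed.

Lemma log_ratio_ge1 Delta eps :
  0 < Delta -> 0 < eps -> eps / Delta <= 327 / 100000 -> 1 <= ln (Delta / eps).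
Proof.
  intros HD He Hu. rewrite <- (ln_exp 1).
  assert (300 <= Delta / eps).
  { apply Rmult_le_reg_r with (eps / Delta); [apply Rdiv_lt_0_compat; auto |].
    replace (Delta / eps * (eps / Delta)) with 1 by (field; lra). lra. }
  pose proof exp_le_3.
  destruct (Rle_lt_or_eq_dec (exp 1) (Delta / eps)) as [h | h]; [lra | | rewrite h; lra].
  apply Rlt_le, ln_increasing; auto. apply exp_pos.
Qed.

Lemma quarter_power_facts N :
  0 < N ->
  0 < Rpower N (1 / 4) /\ Rpower N (1 / 4) ^ 2 = sqrt N /\ Rpower N (1 / 4) ^ 4 = N /\
  Rpower N (3 / 4) = Rpower N (1 / 4) ^ 3 /\ Rpower N (- (1 / 4)) = / Rpower N (1 / 4).
Proof.
  intros HN.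
  assert (P : forall k, Rpower N (1 / 4) ^ k = Rpower N (1 / 4 * INR k)).
  { intros k. rewrite <- Rpower_pow by apply exp_pos. apply Rpower_mult. }
  repeat split.
  - apply exp_pos.
  - rewrite P, <- Rpower_sqrt by lra. f_equal. simpl. field.
  - rewrite P. replace (1 / 4 * INR 4) with 1 by (simpl; field). apply Rpower_1. lra.
  - rewrite P. f_equal. simpl. field.
  - apply Rpower_Ropp.
Qed.

Lemma parameter_choice n L mu Delta eps :
  (2 <= n)%nat -> 0 < L -> 0 < mu -> 0 < Delta -> 0 < eps ->
  L / mu >= sqrt (3 / INR n) * (INR n / 2 + 1) -> eps / Delta <= 327 / 100000 ->
  exists (k : nat) (a s : R),
    (1 <= k)%nat /\ 0 < a /\ 0 < s <= 9 / 10 /\ a * s ^ 2 = mu * (1 - s) /\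
    mu ^ 2 + 8 * mu * a + 4 * a ^ 2 * INR n ^ 2 / (INR n - 1) <= L ^ 2 /\
    INR (2 * k) <= 10 * Rpower (INR n) (- (1 / 4)) * sqrt (L / mu) * ln (Delta / eps) /\
    ln (Delta / eps) <= INR (2 * k) * s /\
    (forall t : nat,
       INR t <= 1 / 500 * (INR n + Rpower (INR n) (3 / 4) * sqrt (L / mu)) * ln (Delta / eps) ->
       INR t * (8 * s / INR n) <= ln (Delta / eps) / 10).
Proof.
  intros Hn HL Hmu HD He Hk Hu. pose proof (INR_ge2 n Hn) as HN.
  set (N := INR n) in *. set (X := Rpower N (1 / 4)). set (Y := sqrt (L / mu)).
  pose proof (log_ratio_ge1 Delta eps HD He Hu) as Hlam. set (lam := ln (Delta / eps)) in *.
  destruct (quarter_power_facts N ltac:(lra)) as [HX [HX2 [HX4 [HX3 HXm]]]]. fold X in HX, HX2, HX4, HX3, HXm.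
  assert (HY : 0 < Y) by (apply sqrt_lt_R0, Rdiv_lt_0_compat; lra).
  assert (HY2 : mu * Y ^ 2 = L)
    by (unfold Y; rewrite pow2_sqrt by (apply Rlt_le, Rdiv_lt_0_compat; lra); field; lra).
  destruct (kappa_consequences N L mu HN Hmu Hk) as [K1 [K2 K3]].
  assert (HXY : X ^ 2 <= 6 / 5 * Y ^ 2).
  { rewrite HX2. replace (Y ^ 2) with (L / mu) by (rewrite <- HY2; field; lra). auto. }
  destruct (step_choice X Y mu HX HY Hmu HXY) as [s [a [Hs [Ha [Has [HaX [HsY Hinv]]]]]]].
  destruct (chain_length lam s) as [k [Hk1 [Hks Hkd]]]; [lra | lra |].
  assert (HR : 9 / 10 <= Y / X).
  { assert (9 / 10 * X <= Y) by (apply sq_le_inv; nra).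
    apply Rmult_le_reg_r with X; [lra |]. replace (Y / X * X) with Y by (field; lra). lra. }
  exists k, a, s. repeat split; auto; try lra.
  - apply smoothness_budget; auto; try lra. rewrite <- HX2, <- HY2. lra.
  - rewrite HXm. fold Y lam.
    replace (10 * / X * Y * lam) with (10 * (Y / X) * lam) by (field; lra).
    assert (lam / s <= lam * (2 / 5 * (Y / X) + 10 / 9)) by (unfold Rdiv; apply Rmult_le_compat_l; lra).
    nra.
  - intros t Ht. fold lam X Y in Ht |- *. rewrite HX3 in Ht.
    apply Rle_trans with (1 / 500 * (N + X ^ 3 * Y) * lam * (8 * s / N)).
    { apply Rmult_le_compat_r; auto. apply Rlt_le, Rdiv_lt_0_compat; lra. }
    replace (1 / 500 * (N + X ^ 3 * Y) * lam * (8 * s / N)) with (8 / 500 * lam * (s + s * Y / X))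
      by (rewrite <- HX4; field; lra).
    assert (s * Y / X <= 5 / 2).
    { apply Rmult_le_reg_r with X; [lra |]. replace (s * Y / X * X) with (s * Y) by (field; lra). lra. }
    nra.
Qed.

Lemma drop_rate_bound N pj s :
  2 <= N -> 0 <= pj <= / N -> 0 < s <= 1 ->
  0 <= pj * (1 - (1 - s) ^ 4) <= 1 / 2 /\ 2 * (pj * (1 - (1 - s) ^ 4)) <= 8 * s / N.
Proof.
  intros HN Hp Hs.
  assert (Hq4 : 0 <= (1 - s) ^ 4 <= 1) by (split; [apply pow_le | apply pow_le_one]; lra).
  assert (H4s : 1 - (1 - s) ^ 4 <= 4 * s) by nra.
  assert (HinvN : / N <= 1 / 2)
    by (apply Rmult_le_reg_r with N; [lra |]; rewrite Rinv_l by lra; lra).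
  split; [split; [apply Rmult_le_pos; lra |] |].
  - apply Rle_trans with (pj * 1); [apply Rmult_le_compat_l |]; lra.
  - apply Rle_trans with (2 * (/ N * (4 * s))); [| unfold Rdiv; lra].
    apply Rmult_le_compat_l; [lra |]. apply Rmult_le_compat; lra.
Qed.

Theorem theorem3p3 :
  exists c C : R, 0 < c /\ 0 < C /\
  forall (n : nat) (L mu Delta eps : R),
    (2 <= n)%nat -> 0 < L -> 0 < mu -> 0 < Delta -> 0 < eps ->
    L / mu >= sqrt (3 / INR n) * (INR n / 2 + 1) ->
    eps / Delta <= 327 / 100000 ->
    forall A : PIFO n,
    exists (d : nat) (fs : nat -> vec d -> R) (gs : nat -> vec d -> vec d)
           (px : nat -> R -> vec d -> vec d),
      INR d <= C * Rpower (INR n) (- (1 / 4)) * sqrt (L / mu) * ln (Delta / eps) /\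
      (forall i, (i < n)%nat -> has_gradient (fs i) (gs i)) /\
      (forall i, (i < n)%nat -> forall (t : nat) (x : vec d), (1 <= t)%nat ->
          is_prox_unique (fs i) (gam A d t) x (px i (gam A d t) x)) /\
      average_smooth n gs L /\
      strongly_convex (avg_fun n fs) mu /\
      exists xs : vec d,
        is_minimizer (avg_fun n fs) xs /\
        avg_fun n fs (init A d) - avg_fun n fs xs = Delta /\
        forall t : nat,
          INR t <= c * (INR n + Rpower (INR n) (3 / 4) * sqrt (L / mu)) * ln (Delta / eps) ->
          expect n (prob A) t (fun l => avg_fun n fs (iterate A d fs gs px l))
            - avg_fun n fs xs >= eps.
Proof.
  exists (1 / 500), 10. split; [lra |]. split; [lra |].
  intros n L mu Delta eps Hn HL Hmu HD He Hk Hu A.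
  (* the least likely component becomes the special one *)
  assert (Hp1 : rsum n (prob A) = 1) by (rewrite <- sum_lt_rsum; apply prob_sum).
  destruct (exists_small_weight n (prob A) ltac:(lia) Hp1) as [j [Hj Hpj]].
  destruct (parameter_choice n L mu Delta eps Hn HL Hmu HD He Hk Hu)
    as [k [a [s [Hk1 [Ha [Hs [Has [Hsmooth [Hdim [Hlen Htime]]]]]]]]]].
  destruct (hard_instance n A j (2 * k) k mu a s Delta Hn Hj eq_refl Hk1 Hmu Ha ltac:(lra) Has HD)
    as [fs [gs [px [Hgrad [Hprox [Hsm [Hsc [xs [Hmin [Hgap Hexp]]]]]]]]]].
  destruct (drop_rate_bound (INR n) (prob A j) s (INR_ge2 n Hn)
              (conj (prob_nonneg n A j Hj) Hpj) ltac:(lra)) as [Hx Hx2].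
  exists (2 * k)%nat, fs, gs, px.
  split; [exact Hdim |]. split; [intros; apply Hgrad |]. split; [intros; apply Hprox |].
  split; [apply Hsm, Hsmooth |]. split; [exact Hsc |].
  exists xs. split; [exact Hmin |]. split; [exact Hgap |].
  intros t Ht. apply Rle_ge. eapply Rle_trans; [| apply Hexp].
  apply final_numerics; auto.
  eapply Rle_trans; [| apply (Htime t Ht)]. apply Rmult_le_compat_l; [apply pos_INR | exact Hx2].
Qed.
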